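(* Assume the initial curve is smooth with $A(0)>0$, and let $\vec f$ be a classical solution of (AP), (LP) or (JP) on $[0,T)$ with $T$ the maximal existence time. Then for $t\in(0,T)$: (1) for (AP): $\frac{dA}{dt}=0$, $A\equiv A(0)>0$, $\frac{dL^2}{dt}\le0$, $\frac{dI_{-1}}{dt}\le0$; (2) for (LP): $\frac{dA}{dt}\ge0$, $A\ge A(0)>0$, $\frac{dL^2}{dt}=0$, $\frac{dI_{-1}}{dt}\le0$; (3) for (JP): $A>0$ and $\frac{dI_{-1}}{dt}\le0$; (4) in all three cases $1-n\le I_{-1}(t)\le I_{-1}(0)$, equivalently $4\pi\le \frac{L(t)^2}{A(t)}\le\frac{L(0)^2}{A(0)}$.
   Context: Fix an integer $n\ge1$. For a closed plane curve $\vec f:\mathbb{R}/L\mathbb{Z}\to\mathbb{R}^2$ parametrized by arc length $s$ ($L>0$ its length): $\vec\nu$ is $\partial_s\vec f$ rotated counterclockwise by $\pi/2$, $\kappa=\partial_s^2\vec f\cdot\vec\nu$, rotation number $n=\frac1{2\pi}\int_0^L\kappa\,ds$, $A=-\frac12\int_0^L\vec f\cdot\vec\nu\,ds$, $\tilde\kappa=\kappa-\frac1L\int_0^L\kappa\,ds$, $I_0=L\int_0^L\tilde\kappa^2\,ds$, $I_{-1}=1-\frac{4n\pi A}{L^2}$. A classical solution on $[0,T)$ is a smooth family $\vec f(\cdot,t)$, $t\in[0,T)$, of closed curves with rotation number $n$, each parametrized by arc length on $\mathbb{R}/L(t)\mathbb{Z}$, satisfying $\partial_t\vec f=(\tilde\kappa-g/L)\vec\nu$,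 where $g$ is one of: (AP) $g\equiv0$; (LP) $g=L\left(\int_0^L\kappa\,ds\right)^{-1}\int_0^L\tilde\kappa^2\,ds=\frac{I_0}{2\pi n}$; (JP) $g=\frac{L^2}{2A}-\int_0^L\kappa\,ds$. All quantities are evaluated at time $t$, e.g. $L(t)$, $A(t)$, $I_{-1}(t)$. *)

From Stdlib Require Import Reals Lra List Classical ClassicalDescription IndefiniteDescription.
Open Scope R_scope.

(* Total integral: the Riemann integral of f on [a,b] if f is Riemann
   integrable there, 0 otherwise (only used for continuous integrands). *)
Definition integ (f : R -> R) (a b : R) : R :=
  match excluded_middle_informative
          (exists pr : Riemann_integrable f a b, True) with
  | left H => RiemannInt (proj1_sig (constructive_indefinite_description _ H))
  | right _ => 0
  end.

(* Derivative of a real function at a point (0 if it does not exist). *)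
Definition deriv1 (h : R -> R) (x : R) : R :=
  match excluded_middle_informative (exists l, derivable_pt_lim h x l) with
  | left H => proj1_sig (constructive_indefinite_description _ H)
  | right _ => 0
  end.

(* Partial derivatives of F(u,t): u = curve parameter, t = time. *)
Definition pu (F : R -> R -> R) : R -> R -> R :=
  fun u t => deriv1 (fun v => F v t) u.
Definition pt (F : R -> R -> R) : R -> R -> R :=
  fun u t => deriv1 (fun s => F u s) t.

Fixpoint dw (w : list bool) (F : R -> R -> R) : R -> R -> R :=
  match w with
  | nil => F
  | b :: w' => (if b then pu else pt) (dw w' F)
  end.

Definition cont2_rel (P : R -> Prop) (F : R -> R -> R) (u t : R) : Prop :=
  forall eps, 0 < eps -> exists del, 0 < del /\
    forall u' t', P t' -> Rabs (u' - u) < del -> Rabs (t' - t) < del ->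
      Rabs (F u' t' - F u t) < eps.

Definition smooth_on (F : R -> R -> R) (T : R) : Prop :=
  (forall w u t, 0 < t < T ->
     cont2_rel (fun _ => True) (dw w F) u t /\
     (exists l, derivable_pt_lim (fun v => dw w F v t) u l) /\
     (exists l, derivable_pt_lim (fun s => dw w F u s) t l)) /\
  (forall k u t, 0 <= t < T ->
     (exists l, derivable_pt_lim (fun v => dw (repeat true k) F v t) u l) /\
     cont2_rel (fun s => 0 <= s < T) (dw (repeat true k) F) u t).

(* Each curve is parametrized over u in R with period 1 (u in R/Z);
   arc length s satisfies ds = |f_u| du, d/ds = |f_u|^{-1} d/du. *)
Section Geom.
Variables x y : R -> R -> R.

Definition speed (u t : R) : R := sqrt (pu x u t ^ 2 + pu y u t ^ 2).
Definition ds (G : R -> R -> R) : R -> R -> R := fun u t => pu G u t / speed u t.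
Definition nux (u t : R) : R := - ds y u t.
Definition nuy (u t : R) : R := ds x u t.
Definition kappa (u t : R) : R :=
  ds (ds x) u t * nux u t + ds (ds y) u t * nuy u t.
Definition int_s (h : R -> R -> R) (t : R) : R :=
  integ (fun u => h u t * speed u t) 0 1.
Definition Len (t : R) : R := int_s (fun _ _ => 1) t.
Definition Ktot (t : R) : R := int_s kappa t.
Definition Area (t : R) : R :=
  - (1/2) * int_s (fun u t => x u t * nux u t + y u t * nuy u t) t.
Definition ktil (u t : R) : R := kappa u t - Ktot t / Len t.
Definition I0 (t : R) : R := Len t * int_s (fun u t => ktil u t ^ 2) t.
Definition Im1 (n : nat) (t : R) : R :=
  1 - 4 * INR n * PI * Area t / (Len t ^ 2).
End Geom.

Inductive flow := AP | LP | JP.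

Definition gterm (p : flow) (x y : R -> R -> R) (t : R) : R :=
  match p with
  | AP => 0
  | LP => Len x y t * / Ktot x y t * int_s x y (fun u t => ktil x y u t ^ 2) t
  | JP => Len x y t ^ 2 / (2 * Area x y t) - Ktot x y t
  end.

Definition classical_sol (n : nat) (p : flow) (x y : R -> R -> R) (T : R) : Prop :=
  smooth_on x T /\ smooth_on y T /\
  (* closed curves: 1-periodic in the parameter *)
  (forall u t, 0 <= t < T -> x (u + 1) t = x u t /\ y (u + 1) t = y u t) /\
  (forall u t, 0 <= t < T -> 0 < speed x y u t) /\
  (* rotation number n *)
  (forall t, 0 <= t < T -> Ktot x y t = 2 * PI * INR n) /\
  (* g is well defined for (JP) *)
  (p = JP -> forall t, 0 <= t < T -> Area x y t <> 0) /\
  (forall u t, 0 < t < T ->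
     pt x u t = (ktil x y u t - gterm p x y t / Len x y t) * nux x y u t /\
     pt y u t = (ktil x y u t - gterm p x y t / Len x y t) * nuy x y u t).

Definition deriv_sat (h : R -> R) (t : R) (P : R -> Prop) : Prop :=
  exists d, derivable_pt_lim h t d /\ P d.

From Stdlib Require Import Reals.
Open Scope R_scope.
From Stdlib Require Import Lra Psatz List ClassicalDescription IndefiniteDescription FunctionalExtensionality.
From Coquelicot Require Import Coquelicot.

(* Along a normal flow with velocity [V], [d/dt speed = - V kappa speed] and
   [A' = - int V ds].  With [V = ktil - g/L] this gives [A' = g] and
   [L' = - int ktil^2 ds + 2 PI n g / L].  In each of (AP), (LP), (JP) the
   quantity [A' L - 2 A L'] is nonnegative (for (JP) it is a sum of squares),
   so [I_{-1} = 1 - 4 n PI A / L^2] is nonincreasing, while [A] stays positive: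
   it is constant for (AP), nondecreasing for (LP), and never vanishes for
   (JP).  The lower bound [1 - n <= I_{-1}] is the isoperimetric inequality
   [4 PI A <= L^2], proved after Hurwitz: cut the curve at half length, let [h]
   be the coordinate normal to the chord (it vanishes at both cut points), and
   combine a weighted Wirtinger inequality on each half with AM-GM. *)

Lemma dlim_value f x l l' : derivable_pt_lim f x l -> l = l' -> derivable_pt_lim f x l'.
Proof. intros H ->; exact H. Qed.
Lemma dlim_ext f g x l : (forall v, f v = g v) -> derivable_pt_lim f x l -> derivable_pt_lim g x l.
Proof. intros E H. apply is_derive_Reals. apply is_derive_Reals in H. eapply is_derive_ext; eauto. Qed.
Lemma dlim_ext_loc f g x l : locally x (fun v => f v = g v) -> derivable_pt_lim f x l -> derivable_pt_lim g x l.
Proof. intros E H. apply is_derive_Reals. apply is_derive_Reals in H. eapply is_derive_ext_loc; eauto. Qed.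
(* The Stdlib rules are stated with [plus_fct], [mult_fct], ...; these
   restatements in [fun v => ...] form are what [apply] can unify with. *)
Lemma dlim_plus f g x a b : derivable_pt_lim f x a -> derivable_pt_lim g x b ->
  derivable_pt_lim (fun v => f v + g v) x (a + b).
Proof. intros; now apply (derivable_pt_lim_plus f g). Qed.
Lemma dlim_minus f g x a b : derivable_pt_lim f x a -> derivable_pt_lim g x b ->
  derivable_pt_lim (fun v => f v - g v) x (a - b).
Proof. intros; now apply (derivable_pt_lim_minus f g). Qed.
Lemma dlim_mult f g x a b : derivable_pt_lim f x a -> derivable_pt_lim g x b ->
  derivable_pt_lim (fun v => f v * g v) x (a * g x + f x * b).
Proof. intros Hf Hg. eapply dlim_value; [exact (derivable_pt_lim_mult f g x a b Hf Hg)|]. ring. Qed.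
Lemma dlim_const c x : derivable_pt_lim (fun _ => c) x 0.
Proof. apply derivable_pt_lim_const. Qed.
Lemma dlim_scal c f x a : derivable_pt_lim f x a -> derivable_pt_lim (fun v => c * f v) x (c * a).
Proof. intros H. eapply dlim_value; [apply (dlim_mult (fun _ => c) f); [apply dlim_const|exact H]|]. ring. Qed.
Lemma dlim_opp f x a : derivable_pt_lim f x a -> derivable_pt_lim (fun v => - f v) x (- a).
Proof. exact (derivable_pt_lim_opp f x a). Qed.
Lemma dlim_sq f x a : derivable_pt_lim f x a -> derivable_pt_lim (fun v => f v ^ 2) x (2 * f x * a).
Proof.
  intros H. eapply dlim_value; [apply (dlim_ext (fun v => f v * f v)); [intros; ring|apply dlim_mult; exact H]|].
  ring.
Qed.
Lemma dlim_div f g x a b : derivable_pt_lim f x a -> derivable_pt_lim g x b -> g x <> 0 ->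
  derivable_pt_lim (fun v => f v / g v) x ((a * g x - f x * b) / (g x) ^ 2).
Proof. intros. eapply dlim_value. exact (derivable_pt_lim_div f g x a b H H0 H1). unfold Rsqr; field; auto. Qed.
Lemma dlim_comp f g x a b : derivable_pt_lim g x a -> derivable_pt_lim f (g x) b ->
  derivable_pt_lim (fun v => f (g v)) x (b * a).
Proof. intros. eapply dlim_value. exact (derivable_pt_lim_comp g f x a b H H0). ring. Qed.
Lemma dlim_sqrt f x a : derivable_pt_lim f x a -> 0 < f x ->
  derivable_pt_lim (fun v => sqrt (f v)) x (a / (2 * sqrt (f x))).
Proof.
  intros. eapply dlim_value. apply (dlim_comp sqrt f); eauto. apply derivable_pt_lim_sqrt; auto.
  unfold Rdiv; ring.
Qed.
Lemma dlim_continuity_pt f x a : derivable_pt_lim f x a -> continuity_pt f x.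
Proof. intros H. apply derivable_continuous_pt. exists a; exact H. Qed.

Definition ex_dlim f x := exists l, derivable_pt_lim f x l.

Lemma ex_dlim_minus f g x : ex_dlim f x -> ex_dlim g x -> ex_dlim (fun v => f v - g v) x.
Proof. intros [a Ha] [b Hb]; eexists; apply dlim_minus; eauto. Qed.
Lemma ex_dlim_mult f g x : ex_dlim f x -> ex_dlim g x -> ex_dlim (fun v => f v * g v) x.
Proof. intros [a Ha] [b Hb]; eexists; apply dlim_mult; eauto. Qed.
Lemma ex_dlim_div f g x : ex_dlim f x -> ex_dlim g x -> g x <> 0 -> ex_dlim (fun v => f v / g v) x.
Proof. intros [a Ha] [b Hb] ?; eexists; apply dlim_div; eauto. Qed.
Lemma ex_dlim_const c x : ex_dlim (fun _ => c) x.
Proof. eexists; apply dlim_const. Qed.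
Lemma ex_dlim_pow f x n : ex_dlim f x -> ex_dlim (fun v => f v ^ n) x.
Proof. intros H. induction n; simpl. apply ex_dlim_const. apply ex_dlim_mult; auto. Qed.
Lemma ex_dlim_ext f g x : (forall v, f v = g v) -> ex_dlim f x -> ex_dlim g x.
Proof. intros E [l H]; exists l; eapply dlim_ext; eauto. Qed.

Lemma cont_plus f g x : continuity_pt f x -> continuity_pt g x -> continuity_pt (fun v => f v + g v) x.
Proof. intros; now apply (continuity_pt_plus f g). Qed.
Lemma cont_minus f g x : continuity_pt f x -> continuity_pt g x -> continuity_pt (fun v => f v - g v) x.
Proof. intros; now apply (continuity_pt_minus f g). Qed.
Lemma cont_mult f g x : continuity_pt f x -> continuity_pt g x -> continuity_pt (fun v => f v * g v) x.
Proof. intros; now apply (continuity_pt_mult f g). Qed.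
Lemma cont_const c x : continuity_pt (fun _ => c) x.
Proof. apply continuity_pt_const; intros ? ?; reflexivity. Qed.
Lemma cont_opp f x : continuity_pt f x -> continuity_pt (fun v => - f v) x.
Proof. intros; now apply (continuity_pt_opp f). Qed.
Lemma cont_div f g x : continuity_pt f x -> continuity_pt g x -> g x <> 0 ->
  continuity_pt (fun v => f v / g v) x.
Proof. intros; now apply (continuity_pt_div f g). Qed.
Lemma cont_comp f g x : continuity_pt g x -> continuity_pt f (g x) -> continuity_pt (fun v => f (g v)) x.
Proof. intros; now apply (continuity_pt_comp g f). Qed.
Lemma cont_pow f x k : continuity_pt f x -> continuity_pt (fun v => f v ^ k) x.
Proof. intros. induction k; simpl. apply cont_const. apply cont_mult; auto. Qed.
Lemma cont_sqrt f x : continuity_pt f x -> 0 <= f x -> continuity_pt (fun v => sqrt (f v)) x.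
Proof. intros; apply (cont_comp sqrt f); auto. apply continuity_pt_sqrt; auto. Qed.
Lemma cont_ext f g x : (forall v, f v = g v) -> continuity_pt f x -> continuity_pt g x.
Proof.
  intros E H eps Heps. destruct (H eps Heps) as [d [Hd H']]. exists d; split; auto.
  intros v Hv. rewrite <- !E. apply H'; auto.
Qed.

Ltac cont := repeat first [ solve [auto] | apply cont_const | apply cont_plus | apply cont_minus
  | (apply cont_div; [ | | solve [auto]]) | apply cont_mult | apply cont_opp | apply cont_pow ].

Lemma continuity_pt_continuous f x : continuity_pt f x -> continuous f x.
Proof. intros H. apply continuity_pt_filterlim in H. exact H. Qed.

Lemma ex_RInt_continuity f a b : a <= b -> (forall z, a <= z <= b -> continuity_pt f z) -> ex_RInt f a b.
Proof.
  intros Hab H. apply (ex_RInt_continuous (V := R_CompleteNormedModule)). intros z Hz.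
  rewrite Rmin_left in Hz by lra; rewrite Rmax_right in Hz by lra. apply continuity_pt_continuous; auto.
Qed.

(* Coquelicot states these with the generic [plus], [scal] of a normed
   module; restated with [Rplus], [Rmult] they can be used by [rewrite]. *)
Lemma RInt_plusR f g a b : ex_RInt f a b -> ex_RInt g a b ->
  @eq R (RInt (fun v => f v + g v) a b) (RInt f a b + RInt g a b).
Proof. exact (RInt_plus f g a b). Qed.
Lemma RInt_minusR f g a b : ex_RInt f a b -> ex_RInt g a b ->
  @eq R (RInt (fun v => f v - g v) a b) (RInt f a b - RInt g a b).
Proof. exact (RInt_minus f g a b). Qed.
Lemma RInt_scalR c f a b : ex_RInt f a b -> @eq R (RInt (fun v => c * f v) a b) (c * RInt f a b).
Proof. intros. exact (RInt_scal f a b c H). Qed.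
Lemma RInt_ChaslesR f a b c : ex_RInt f a b -> ex_RInt f b c ->
  @eq R (RInt f a b + RInt f b c) (RInt f a c).
Proof. exact (RInt_Chasles f a b c). Qed.
Lemma RInt_ext_open (f g : R -> R) a b : a <= b -> (forall x, a < x < b -> f x = g x) ->
  @eq R (RInt f a b) (RInt g a b).
Proof. intros Hab H. apply RInt_ext. rewrite Rmin_left, Rmax_right by lra. auto. Qed.

Lemma RInt_dlim F f a b : a <= b -> (forall u, a <= u <= b -> derivable_pt_lim F u (f u)) ->
  (forall u, a <= u <= b -> continuity_pt f u) -> @eq R (RInt f a b) (F b - F a).
Proof.
  intros Hab HF Hf. apply is_RInt_unique.
  assert (H := is_RInt_derive F f a b). rewrite Rmin_left, Rmax_right in H by lra.
  apply H. intros; apply is_derive_Reals; auto. intros; apply continuity_pt_continuous; auto.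
Qed.

Lemma dlim_RInt_upper f a u : (forall z, continuity_pt f z) ->
  derivable_pt_lim (fun v => RInt f a v) u (f u).
Proof.
  intros Hf. apply is_derive_Reals. apply is_derive_RInt with (a := a).
  - apply filter_forall. intros b0. apply (RInt_correct (V := R_CompleteNormedModule)).
    apply (ex_RInt_continuous (V := R_CompleteNormedModule)). intros; apply continuity_pt_continuous; auto.
  - apply continuity_pt_continuous; auto.
Qed.

Section Wirtinger.
Variables (sg h h1 : R -> R) (al be : R).
Hypothesis Hab : al < be.
Hypothesis Csg : forall u, continuity_pt sg u.
Hypothesis Psg : forall u, 0 < sg u.
Hypothesis Dh : forall u, derivable_pt_lim h u (h1 u).
Hypothesis Ch1 : forall u, continuity_pt h1 u.
Hypothesis Ha : h al = 0.
Hypothesis Hb : h be = 0.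

Let Ch u : continuity_pt h u := dlim_continuity_pt _ _ _ (Dh u).

(* Picone's identity: with [c' = - k sg (1 + c^2)], [h1^2 / sg] is
   [(h1 - k sg h c)^2 / sg + k (h^2 c)' + k^2 sg h^2], and [h^2 c] vanishes at
   both ends. *)
Lemma picone_bound (c : R -> R) k :
  (forall u, al <= u <= be -> derivable_pt_lim c u (- k * sg u * (1 + c u ^ 2))) ->
  k ^ 2 * RInt (fun u => sg u * h u ^ 2) al be <= RInt (fun u => h1 u ^ 2 / sg u) al be.
Proof.
  intros dc.
  assert (cc : forall u, al <= u <= be -> continuity_pt c u)
    by (intros; eapply dlim_continuity_pt; apply dc; auto).
  set (F' := fun u => 2 * h u * h1 u * c u - k * sg u * h u ^ 2 * (1 + c u ^ 2)).
  assert (IF : @eq R (RInt F' al be) 0).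
  { rewrite (RInt_dlim (fun u => h u ^ 2 * c u) F' al be); [|lra| |].
    - rewrite Ha, Hb. ring.
    - intros u Hu. eapply dlim_value. apply dlim_mult. apply dlim_sq. apply Dh. apply dc; auto.
      unfold F'; ring.
    - intros u Hu. unfold F'. assert (Hc := cc u Hu). cont. }
  set (G := fun u => (h1 u - k * sg u * h u * c u) ^ 2 / sg u).
  assert (Hsq : forall u, h1 u ^ 2 / sg u = G u + k * F' u + k ^ 2 * (sg u * h u ^ 2)).
  { intros u. unfold G, F'. specialize (Psg u). field. lra. }
  assert (EX : forall f, (forall u, al <= u <= be -> continuity_pt f u) -> ex_RInt f al be)
    by (intros; apply ex_RInt_continuity; [lra|auto]).
  assert (cG : forall u, al <= u <= be -> continuity_pt G u).
  { intros u Hu. assert (Hc := cc u Hu). assert (sg u <> 0) by (specialize (Psg u); lra). unfold G; cont. }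
  assert (cF' : forall u, al <= u <= be -> continuity_pt F' u).
  { intros u Hu. assert (Hc := cc u Hu). unfold F'; cont. }
  rewrite (RInt_ext_open _ _ al be (Rlt_le _ _ Hab) (fun u _ => Hsq u)).
  rewrite !RInt_plusR, !RInt_scalR, IF; try (apply EX; intros; cont).
  assert (0 <= RInt G al be); [|lra].
  apply RInt_ge_0; [lra|apply EX; auto|]. intros u _; unfold G.
  apply Rdiv_le_0_compat; [apply pow2_ge_0|auto].
Qed.

(* The comparison function is [cot (k S + (PI - k l) / 2)] with [S] the
   weighted arc length from [al]: its argument stays in (0, PI) because
   [k l < PI]. *)
Lemma weighted_wirtinger_lt k : 0 < k -> k * RInt sg al be < PI ->
  k ^ 2 * RInt (fun u => sg u * h u ^ 2) al be <= RInt (fun u => h1 u ^ 2 / sg u) al be.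
Proof.
  intros Hk Hkl.
  set (S := fun u => RInt sg al u).
  assert (dS : forall u, derivable_pt_lim S u (sg u)) by (intros; apply dlim_RInt_upper; auto).
  set (l := RInt sg al be) in *.
  assert (Srange : forall u, al <= u <= be -> 0 <= S u <= l).
  { intros u Hu. split.
    - apply RInt_ge_0; [lra| apply ex_RInt_continuity; [lra|auto] |]. intros; apply Rlt_le; auto.
    - unfold l, S. rewrite <- (RInt_ChaslesR sg al u be) by (apply ex_RInt_continuity; [lra|auto]).
      assert (0 <= RInt sg u be); [|lra].
      apply RInt_ge_0; [lra| apply ex_RInt_continuity; [lra|auto] |]. intros; apply Rlt_le; auto. }
  set (ph := fun u => k * S u + (PI - k * l) / 2).
  assert (dph : forall u, derivable_pt_lim ph u (k * sg u)).
  { intros u. eapply dlim_value. apply dlim_plus. apply dlim_scal. apply dS. apply dlim_const. ring. }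
  assert (sinp : forall u, al <= u <= be -> 0 < sin (ph u)).
  { intros u Hu. destruct (Srange u Hu). apply sin_gt_0; unfold ph.
    - assert (0 <= k * S u) by (apply Rmult_le_pos; lra). lra.
    - assert (k * S u <= k * l) by (apply Rmult_le_compat_l; lra). lra. }
  apply (picone_bound (fun u => cos (ph u) / sin (ph u))).
  intros u Hu. specialize (sinp u Hu). eapply dlim_value; [apply dlim_div|].
  - apply (dlim_comp cos ph). apply dph. apply derivable_pt_lim_cos.
  - apply (dlim_comp sin ph). apply dph. apply derivable_pt_lim_sin.
  - lra.
  - assert (E := sin2_cos2 (ph u)). unfold Rsqr in E. field_simplify; [|lra|lra].
    replace (cos (ph u) ^ 2) with (1 - sin (ph u) ^ 2) by (simpl; lra). field. lra.
Qed.

Lemma weighted_wirtinger :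
  (PI / RInt sg al be) ^ 2 * RInt (fun u => sg u * h u ^ 2) al be
    <= RInt (fun u => h1 u ^ 2 / sg u) al be.
Proof.
  assert (Hl : 0 < RInt sg al be).
  { apply RInt_gt_0; auto. intros; apply continuity_pt_continuous; auto. }
  set (l := RInt sg al be) in *.
  set (X := RInt (fun u => sg u * h u ^ 2) al be).
  set (Y := RInt (fun u => h1 u ^ 2 / sg u) al be).
  assert (HY : 0 <= Y).
  { apply RInt_ge_0. lra.
    - apply ex_RInt_continuity. lra. intros z _. specialize (Psg z).
      apply cont_div; [apply cont_pow|..]; auto; lra.
    - intros u _. apply Rdiv_le_0_compat; [apply pow2_ge_0|auto]. }
  destruct (Rle_or_lt ((PI / l) ^ 2 * X) Y) as [H|H]; [exact H|exfalso].
  assert (PIl : 0 < PI / l) by (apply Rdiv_lt_0_compat; [apply PI_RGT_0|auto]).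
  assert (HX : 0 < X) by (assert (0 <= (PI / l) ^ 2) by apply pow2_ge_0; nra).
  (* any [k] with [sqrt (Y/X) < k < PI/l] contradicts [weighted_wirtinger_lt] *)
  set (r := sqrt (Y / X)).
  assert (Hr0 : 0 <= r) by apply sqrt_pos.
  assert (Hr2 : r ^ 2 = Y / X).
  { unfold r; rewrite <- Rsqr_pow2; apply Rsqr_sqrt; apply Rdiv_le_0_compat; lra. }
  assert (Hrl : r < PI / l).
  { assert (Y / X < (PI / l) ^ 2); [|nra].
    apply (Rmult_lt_reg_r X); auto. unfold Rdiv at 1. rewrite Rmult_assoc, Rinv_l by lra. lra. }
  set (k := (r + PI / l) / 2).
  assert (Hkl : k * l < PI).
  { assert (k < PI / l) by (unfold k; lra). apply (Rmult_lt_compat_r l) in H0; auto.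
    unfold Rdiv in H0. rewrite Rmult_assoc, Rinv_l in H0 by lra. lra. }
  pose proof (weighted_wirtinger_lt k ltac:(unfold k; lra) Hkl) as W. fold X Y in W.
  assert (r ^ 2 < k ^ 2) by (unfold k; nra).
  assert (Y < k ^ 2 * X); [|lra].
  replace Y with (r ^ 2 * X) by (rewrite Hr2; field; lra). nra.
Qed.

End Wirtinger.

Lemma weighted_wirtinger_halves (sg h h1 : R -> R) m : 0 < m < 1 ->
  (forall u, continuity_pt sg u) -> (forall u, 0 < sg u) ->
  (forall u, derivable_pt_lim h u (h1 u)) -> (forall u, continuity_pt h1 u) ->
  h 0 = 0 -> h m = 0 -> h 1 = 0 ->
  @eq R (RInt sg 0 m) (RInt sg 0 1 / 2) -> @eq R (RInt sg m 1) (RInt sg 0 1 / 2) ->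
  (2 * PI / RInt sg 0 1) ^ 2 * RInt (fun u => sg u * h u ^ 2) 0 1
    <= RInt (fun u => h1 u ^ 2 / sg u) 0 1.
Proof.
  intros Hm Csg Psg Dh Ch1 h0 hm h1' I1 I2.
  assert (Ch : forall u, continuity_pt h u) by (intros; eapply dlim_continuity_pt; apply Dh).
  assert (Hsg : forall u, sg u <> 0) by (intros u; specialize (Psg u); lra).
  assert (HL : 0 < RInt sg 0 1).
  { apply RInt_gt_0. lra. intros; auto. intros; apply continuity_pt_continuous; auto. }
  pose proof (weighted_wirtinger sg h h1 0 m ltac:(lra) Csg Psg Dh Ch1 h0 hm) as W1.
  pose proof (weighted_wirtinger sg h h1 m 1 ltac:(lra) Csg Psg Dh Ch1 hm h1') as W2.
  rewrite I1 in W1. rewrite I2 in W2.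
  replace (PI / (RInt sg 0 1 / 2)) with (2 * PI / RInt sg 0 1) in W1, W2 by (field; lra).
  rewrite <- (RInt_ChaslesR (fun u => sg u * h u ^ 2) 0 m 1),
    <- (RInt_ChaslesR (fun u => h1 u ^ 2 / sg u) 0 m 1)
    by (apply ex_RInt_continuity; [lra|intros; cont]).
  rewrite Rmult_plus_distr_l. apply Rplus_le_compat; assumption.
Qed.

Lemma exists_half_length_point (sg : R -> R) :
  (forall u, continuity_pt sg u) -> (forall u, 0 < sg u) ->
  exists m, 0 < m < 1 /\
    @eq R (RInt sg 0 m) (RInt sg 0 1 / 2) /\ @eq R (RInt sg m 1) (RInt sg 0 1 / 2).
Proof.
  intros Csg Psg.
  assert (HL : 0 < RInt sg 0 1).
  { apply RInt_gt_0. lra. intros; auto. intros; apply continuity_pt_continuous; auto. }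
  pose (S := fun u => RInt sg 0 u).
  assert (S0 : S 0 = 0) by (unfold S; rewrite RInt_point; reflexivity).
  destruct (IVT_gen S 0 1 (RInt sg 0 1 / 2)) as [m [Hm Sm]].
  { intros u; eapply dlim_continuity_pt; apply dlim_RInt_upper; auto. }
  { assert (S1 : S 1 = RInt sg 0 1) by reflexivity.
    rewrite S0, S1, Rmin_left, Rmax_right by lra. lra. }
  rewrite Rmin_left, Rmax_right in Hm by lra.
  assert (Hm0 : m <> 0) by (intros ->; rewrite S0 in Sm; lra).
  assert (Hm1 : m <> 1) by (intros ->; unfold S in Sm; lra).
  exists m. split; [lra|split; [exact Sm|]].
  assert (E := RInt_ChaslesR sg 0 m 1 ltac:(apply ex_RInt_continuity; auto; lra)
                 ltac:(apply ex_RInt_continuity; auto; lra)).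
  unfold S in Sm; rewrite Sm in E. lra.
Qed.

Lemma exists_unit_normal p q : exists c d, c ^ 2 + d ^ 2 = 1 /\ - p * d + q * c = 0.
Proof.
  destruct (Req_dec (p ^ 2 + q ^ 2) 0) as [E|E].
  - exists 1, 0. split. ring. assert (q = 0) by nra. subst; ring.
  - set (r := sqrt (p ^ 2 + q ^ 2)).
    assert (r0 : 0 < r) by (apply sqrt_lt_R0; nra).
    assert (r2 : r ^ 2 = p ^ 2 + q ^ 2) by (unfold r; rewrite <- Rsqr_pow2; apply Rsqr_sqrt; nra).
    exists (p / r), (q / r). split; [|field; lra].
    field_simplify; [|lra]. rewrite r2. field. lra.
Qed.

(* A closed C^1 curve [(a, b)] on [0, 1] written in coordinates [(g, h)]
   relative to the point [(a 0, b 0)] and the orthonormal frame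
   [(c, d), (-d, c)]. *)
Section RotatedFrame.
Variables (a b a1 b1 : R -> R) (c d : R).
Hypothesis Da : forall u, derivable_pt_lim a u (a1 u).
Hypothesis Db : forall u, derivable_pt_lim b u (b1 u).
Hypothesis Ca1 : forall u, continuity_pt a1 u.
Hypothesis Cb1 : forall u, continuity_pt b1 u.
Hypothesis Pa : a 1 = a 0.
Hypothesis Pb : b 1 = b 0.
Hypothesis Hcd : c ^ 2 + d ^ 2 = 1.

Definition frame_h u := - (a u - a 0) * d + (b u - b 0) * c.
Definition frame_h1 u := - a1 u * d + b1 u * c.
Definition frame_g u := (a u - a 0) * c + (b u - b 0) * d.
Definition frame_g1 u := a1 u * c + b1 u * d.

Let Ca u : continuity_pt a u := dlim_continuity_pt _ _ _ (Da u).
Let Cb u : continuity_pt b u := dlim_continuity_pt _ _ _ (Db u).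

Lemma dlim_frame_h u : derivable_pt_lim frame_h u (frame_h1 u).
Proof.
  eapply dlim_value. apply dlim_plus; apply (dlim_mult _ (fun _ => _)).
  apply dlim_opp, dlim_minus. apply Da. apply dlim_const. apply dlim_const.
  apply dlim_minus. apply Db. apply dlim_const. apply dlim_const. unfold frame_h1; ring.
Qed.

Lemma frame_speed_sq u : frame_h1 u ^ 2 + frame_g1 u ^ 2 = a1 u ^ 2 + b1 u ^ 2.
Proof.
  unfold frame_h1, frame_g1.
  transitivity ((a1 u ^ 2 + b1 u ^ 2) * (c ^ 2 + d ^ 2)); [ring|rewrite Hcd; ring].
Qed.

(* [g h + a 0 * b - b 0 * a] is a primitive of the difference of the two
   area integrands, and it is 1-periodic. *)
Lemma frame_area :
  @eq R (RInt (fun u => a u * b1 u - b u * a1 u) 0 1)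
        (-2 * RInt (fun u => frame_h u * frame_g1 u) 0 1).
Proof.
  set (Fn' := fun u => frame_g1 u * frame_h u + frame_g u * frame_h1 u + a 0 * b1 u - b 0 * a1 u).
  assert (EX : forall f, (forall u, continuity_pt f u) -> ex_RInt f 0 1)
    by (intros; apply ex_RInt_continuity; auto; lra).
  assert (Cf : forall u, continuity_pt frame_h u /\ continuity_pt frame_h1 u /\
                         continuity_pt frame_g u /\ continuity_pt frame_g1 u).
  { intros u; unfold frame_h, frame_h1, frame_g, frame_g1; repeat split; cont. }
  assert (CFn' : forall u, continuity_pt Fn' u).
  { intros u. destruct (Cf u) as (?&?&?&?). unfold Fn'; cont. }
  assert (IFn : @eq R (RInt Fn' 0 1) 0).
  { rewrite (RInt_dlim (fun u => frame_g u * frame_h u + a 0 * b u - b 0 * a u) Fn' 0 1);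
      [|lra| |auto].
    - unfold frame_g, frame_h. rewrite Pa, Pb. ring.
    - intros u _. eapply dlim_value. apply dlim_minus. apply dlim_plus. apply dlim_mult.
      + eapply dlim_value. apply dlim_plus; apply (dlim_mult _ (fun _ => _)).
        apply dlim_minus. apply Da. apply dlim_const. apply dlim_const.
        apply dlim_minus. apply Db. apply dlim_const. apply dlim_const. reflexivity.
      + apply dlim_frame_h.
      + apply dlim_scal, Db.
      + apply dlim_scal, Da.
      + unfold Fn', frame_g1; ring. }
  rewrite (RInt_ext_open _ (fun u => (-2) * (frame_h u * frame_g1 u) + Fn' u)); [|lra|].
  - rewrite RInt_plusR, IFn, RInt_scalR; try apply Rplus_0_r; apply EX; intros u;
      destruct (Cf u) as (?&?&?&?); cont.
  - intros u _. unfold Fn', frame_h, frame_g, frame_h1, frame_g1.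
    transitivity ((a u * b1 u - b u * a1 u)
      - ((a u - a 0) * b1 u - (b u - b 0) * a1 u) * (1 - (c ^ 2 + d ^ 2))); [rewrite Hcd|]; ring.
Qed.

End RotatedFrame.

Lemma RInt_frame_speed (a1 b1 : R -> R) c d :
  (forall u, continuity_pt a1 u) -> (forall u, continuity_pt b1 u) -> c ^ 2 + d ^ 2 = 1 ->
  (forall u, 0 < sqrt (a1 u ^ 2 + b1 u ^ 2)) ->
  RInt (fun u => frame_h1 a1 b1 c d u ^ 2 / sqrt (a1 u ^ 2 + b1 u ^ 2)) 0 1
  + RInt (fun u => frame_g1 a1 b1 c d u ^ 2 / sqrt (a1 u ^ 2 + b1 u ^ 2)) 0 1
  = RInt (fun u => sqrt (a1 u ^ 2 + b1 u ^ 2)) 0 1.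
Proof.
  intros Ca1 Cb1 Hcd Psg.
  assert (Csg : forall u, continuity_pt (fun v => sqrt (a1 v ^ 2 + b1 v ^ 2)) u).
  { intros u; apply cont_sqrt. cont. nra. }
  assert (Hsg : forall u, sqrt (a1 u ^ 2 + b1 u ^ 2) <> 0) by (intros u; specialize (Psg u); lra).
  rewrite <- RInt_plusR
    by (apply ex_RInt_continuity; [lra|]; intros; unfold frame_h1, frame_g1; cont).
  apply RInt_ext_open; [lra|]. intros u _.
  assert (E := frame_speed_sq a1 b1 c d Hcd u).
  assert (S2 : sqrt (a1 u ^ 2 + b1 u ^ 2) ^ 2 = a1 u ^ 2 + b1 u ^ 2).
  { rewrite <- Rsqr_pow2; apply Rsqr_sqrt; nra. }
  apply (Rmult_eq_reg_r (sqrt (a1 u ^ 2 + b1 u ^ 2))); [|auto]. field_simplify; [|auto]. lra.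
Qed.

Lemma RInt_cross_le (sg f g : R -> R) k : 0 < k ->
  (forall u, continuity_pt sg u) -> (forall u, 0 < sg u) ->
  (forall u, continuity_pt f u) -> (forall u, continuity_pt g u) ->
  - RInt (fun u => f u * g u) 0 1
    <= k / 2 * RInt (fun u => sg u * f u ^ 2) 0 1 + / (2 * k) * RInt (fun u => g u ^ 2 / sg u) 0 1.
Proof.
  intros Hk Csg Psg Cf Cg.
  assert (Hsg : forall u, sg u <> 0) by (intros u; specialize (Psg u); lra).
  assert (EX : forall h, (forall u, continuity_pt h u) -> ex_RInt h 0 1)
    by (intros; apply ex_RInt_continuity; auto; lra).
  rewrite <- (Rmult_1_l (RInt (fun u => f u * g u) 0 1)), Ropp_mult_distr_l, <- RInt_scalR
    by (apply EX; intros; cont).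
  rewrite <- !RInt_scalR, <- RInt_plusR by (apply EX; intros; cont).
  apply RInt_le; [lra|apply EX; intros; cont|apply EX; intros; cont|].
  intros u _. specialize (Psg u). set (s := sg u) in *.
  (* AM-GM: the difference is [(k s f + g)^2 / (2 k s)] *)
  assert (0 <= (k * s * f u + g u) ^ 2 / (2 * k * s)).
  { apply Rdiv_le_0_compat; [apply pow2_ge_0|nra]. }
  assert (k / 2 * (s * f u ^ 2) + / (2 * k) * (g u ^ 2 / s) - - 1 * (f u * g u)
          = (k * s * f u + g u) ^ 2 / (2 * k * s)) by (field; lra).
  lra.
Qed.

(* [-P <= k/2 X + Z/(2k) <= (Y + Z)/(2k) = L^2/(4 PI)] for [k = 2 PI / L] *)
Lemma isoperimetric_bound_of_split L X Y Z P : 0 < L ->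
  (2 * PI / L) ^ 2 * X <= Y -> Y + Z = L ->
  - P <= 2 * PI / L / 2 * X + / (2 * (2 * PI / L)) * Z ->
  4 * PI * - P <= L ^ 2.
Proof.
  intros HL WX YZ B. assert (HPI := PI_RGT_0).
  set (k := 2 * PI / L) in *.
  assert (Hk : 0 < k) by (unfold k; apply Rdiv_lt_0_compat; lra).
  assert (k / 2 * X <= / (2 * k) * Y).
  { apply (Rmult_le_reg_l (2 * k)); [lra|].
    replace (2 * k * (/ (2 * k) * Y)) with Y by (field; lra). nra. }
  assert (E : / (2 * k) * L = L ^ 2 / (4 * PI)) by (unfold k; field; split; lra).
  assert (EYZ : / (2 * k) * Y + / (2 * k) * Z = / (2 * k) * L) by (rewrite <- YZ; ring).
  assert (HP : 4 * PI * - P <= 4 * PI * (L ^ 2 / (4 * PI))) by (apply Rmult_le_compat_l; lra).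
  replace (4 * PI * (L ^ 2 / (4 * PI))) with (L ^ 2) in HP by (field; lra).
  exact HP.
Qed.

Lemma isoperimetric_inequality (a b a1 b1 : R -> R) :
  (forall u, derivable_pt_lim a u (a1 u)) -> (forall u, derivable_pt_lim b u (b1 u)) ->
  (forall u, continuity_pt a1 u) -> (forall u, continuity_pt b1 u) ->
  a 1 = a 0 -> b 1 = b 0 -> (forall u, 0 < sqrt (a1 u ^ 2 + b1 u ^ 2)) ->
  4 * PI * (1 / 2 * RInt (fun u => a u * b1 u - b u * a1 u) 0 1)
    <= (RInt (fun u => sqrt (a1 u ^ 2 + b1 u ^ 2)) 0 1) ^ 2.
Proof.
  intros Da Db Ca1 Cb1 Pa Pb Psg.
  set (sg := fun u => sqrt (a1 u ^ 2 + b1 u ^ 2)) in *.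
  change (forall u, 0 < sg u) in Psg.
  assert (Csg : forall u, continuity_pt sg u).
  { intros u; unfold sg; apply cont_sqrt. cont. nra. }
  destruct (exists_half_length_point sg Csg Psg) as [m [Hm [I1 I2]]].
  assert (HL : 0 < RInt sg 0 1).
  { apply RInt_gt_0. lra. intros; auto. intros; apply continuity_pt_continuous; auto. }
  remember (RInt sg 0 1 : R) as L eqn:HLdef.
  destruct (exists_unit_normal (a m - a 0) (b m - b 0)) as [c [d [Hcd Hpq]]].
  set (h := frame_h a b c d). set (h1 := frame_h1 a1 b1 c d). set (g1 := frame_g1 a1 b1 c d).
  assert (Dh := dlim_frame_h a b a1 b1 c d Da Db).
  assert (Ch1 : forall u, continuity_pt h1 u) by (intros; unfold h1, frame_h1; cont).
  assert (Cg1 : forall u, continuity_pt g1 u) by (intros; unfold g1, frame_g1; cont).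
  assert (Ch : forall u, continuity_pt h u) by (intros; eapply dlim_continuity_pt; apply Dh).
  assert (h0 : h 0 = 0) by (unfold h, frame_h; ring).
  assert (hm : h m = 0) by (unfold h, frame_h; lra).
  assert (h1' : h 1 = 0) by (unfold h, frame_h; rewrite Pa, Pb; ring).
  set (k := 2 * PI / L).
  assert (Hk : 0 < k) by (unfold k; apply Rdiv_lt_0_compat; [|auto]; assert (H := PI_RGT_0); lra).
  set (X := RInt (fun u => sg u * h u ^ 2) 0 1).
  set (Y := RInt (fun u => h1 u ^ 2 / sg u) 0 1).
  set (Z := RInt (fun u => g1 u ^ 2 / sg u) 0 1).
  assert (WX : k ^ 2 * X <= Y).
  { unfold k, X, Y. rewrite HLdef in *. apply weighted_wirtinger_halves with m; auto. }
  assert (YZ : Y + Z = L) by (rewrite HLdef; apply (RInt_frame_speed a1 b1 c d Ca1 Cb1 Hcd Psg)).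
  assert (A := frame_area a b a1 b1 c d Da Db Ca1 Cb1 Pa Pb Hcd). fold h g1 in A.
  assert (B := RInt_cross_le sg h g1 k Hk Csg Psg Ch Cg1). fold X Z in B.
  rewrite A. replace (4 * PI * (1 / 2 * (-2 * RInt (fun u => h u * g1 u) 0 1)))
    with (4 * PI * - RInt (fun u => h u * g1 u) 0 1) by field.
  apply (isoperimetric_bound_of_split L X Y Z); auto.
Qed.

Lemma deriv1_unique h x l : derivable_pt_lim h x l -> deriv1 h x = l.
Proof.
  intros H. unfold deriv1. destruct excluded_middle_informative as [E|E].
  - destruct constructive_indefinite_description as [l' Hl']. simpl.
    exact (uniqueness_limite h x l' l Hl' H).
  - exfalso; apply E; exists l; exact H.
Qed.

Lemma integ_RInt f a b : ex_RInt f a b -> integ f a b = RInt f a b.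
Proof.
  intros H. unfold integ. destruct excluded_middle_informative as [E|E].
  - destruct constructive_indefinite_description as [pr Hpr]. simpl. symmetry; apply RInt_Reals.
  - exfalso; apply E. exists (ex_RInt_Reals_0 f a b H); exact I.
Qed.

Lemma Derive_dlim f x l : derivable_pt_lim f x l -> Derive f x = l.
Proof. intros H. apply is_derive_unique. apply is_derive_Reals; auto. Qed.

Lemma continuity_2d_pt_cont2_rel G u t :
  cont2_rel (fun _ => True) G u t -> continuity_2d_pt G u t.
Proof.
  intros H eps. destruct (H eps (cond_pos eps)) as [del [Hd H']].
  exists (mkposreal del Hd). intros u' t' H1 H2. apply H'; auto.
Qed.

Lemma continuity_2d_pt_swap G u t :
  continuity_2d_pt G u t -> continuity_2d_pt (fun a b => G b a) t u.
Proof. intros H eps. destruct (H eps) as [d Hd]. exists d. intros a b H1 H2. apply Hd; auto. Qed.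

Lemma continuity_2d_pt_fst G u t : continuity_2d_pt G u t -> continuity_pt (fun v => G v t) u.
Proof.
  intros H eps Heps. destruct (H (mkposreal eps Heps)) as [d Hd].
  exists d. split. apply cond_pos. intros v [_ Hv]. simpl in *. unfold R_dist in *.
  apply Hd; auto. rewrite Rminus_diag, Rabs_R0; apply cond_pos.
Qed.

Lemma continuity_2d_pt_sqrt G u t : continuity_2d_pt G u t -> 0 <= G u t ->
  continuity_2d_pt (fun a b => sqrt (G a b)) u t.
Proof. intros. apply continuity_1d_2d_pt_comp; auto. apply continuity_pt_sqrt; auto. Qed.

Lemma continuity_2d_pt_pow G u t n : continuity_2d_pt G u t ->
  continuity_2d_pt (fun a b => G a b ^ n) u t.
Proof. intros. induction n; simpl. apply continuity_2d_pt_const. apply continuity_2d_pt_mult; auto. Qed.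

Lemma continuity_2d_pt_div F G u t : continuity_2d_pt F u t -> continuity_2d_pt G u t -> G u t <> 0 ->
  continuity_2d_pt (fun a b => F a b / G a b) u t.
Proof. intros. apply continuity_2d_pt_mult; auto. apply continuity_2d_pt_inv; auto. Qed.

Lemma locally_open_interval (P : R -> Prop) T t : 0 < t < T -> (forall s, 0 < s < T -> P s) -> locally t P.
Proof.
  intros Ht H. assert (Hd : 0 < Rmin t (T - t)) by (apply Rmin_pos; lra).
  exists (mkposreal _ Hd). intros s Hs. apply H.
  unfold ball in Hs; simpl in Hs; unfold AbsRing_ball, abs, minus, plus, opp in Hs; simpl in Hs.
  assert (Rmin t (T - t) <= t) by apply Rmin_l. assert (Rmin t (T - t) <= T - t) by apply Rmin_r.
  apply Rabs_def2 in Hs. lra.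
Qed.

Lemma locally_2d_open_interval_snd (P : R -> R -> Prop) T u t : 0 < t < T ->
  (forall a b, 0 < b < T -> P a b) -> locally_2d P u t.
Proof.
  intros Ht H. assert (Hd : 0 < Rmin t (T - t)) by (apply Rmin_pos; lra).
  exists (mkposreal _ Hd). intros a b _ Hb. apply H. simpl in Hb.
  assert (Rmin t (T - t) <= t) by apply Rmin_l. assert (Rmin t (T - t) <= T - t) by apply Rmin_r.
  apply Rabs_def2 in Hb. lra.
Qed.

Lemma locally_2d_open_interval_fst (P : R -> R -> Prop) T t u : 0 < t < T ->
  (forall a b, 0 < a < T -> P a b) -> locally_2d P t u.
Proof.
  intros Ht H. destruct (locally_2d_open_interval_snd (fun a b => P b a) T u t Ht) as [d Hd].
  - intros a b Hb. apply H; auto.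
  - exists d. intros a b Ha Hb. apply Hd; auto.
Qed.

Section Smooth.
Variables (F : R -> R -> R) (T : R).
Hypothesis HS : smooth_on F T.

Lemma smooth_pu_repeat k u t : 0 <= t < T ->
  derivable_pt_lim (fun v => dw (repeat true k) F v t) u (dw (repeat true (S k)) F u t).
Proof.
  intros Ht. destruct HS as [_ H2]. destruct (H2 k u t Ht) as [[l Hl] _].
  change (dw (repeat true (S k)) F u t) with (pu (dw (repeat true k) F) u t).
  unfold pu. rewrite (deriv1_unique _ _ _ Hl). exact Hl.
Qed.

Lemma smooth_cont_at0 k u : 0 < T -> cont2_rel (fun s => 0 <= s < T) (dw (repeat true k) F) u 0.
Proof. intros HT. destruct HS as [_ H2]. apply (H2 k u 0). lra. Qed.

Lemma smooth_pu w u t : 0 < t < T -> derivable_pt_lim (fun v => dw w F v t) u (dw (true :: w) F u t).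
Proof.
  intros Ht. destruct HS as [H1 _]. destruct (H1 w u t Ht) as [_ [[l Hl] _]].
  change (dw (true :: w) F u t) with (pu (dw w F) u t).
  unfold pu. rewrite (deriv1_unique _ _ _ Hl). exact Hl.
Qed.

Lemma smooth_pt w u t : 0 < t < T -> derivable_pt_lim (fun s => dw w F u s) t (dw (false :: w) F u t).
Proof.
  intros Ht. destruct HS as [H1 _]. destruct (H1 w u t Ht) as [_ [_ [l Hl]]].
  change (dw (false :: w) F u t) with (pt (dw w F) u t).
  unfold pt. rewrite (deriv1_unique _ _ _ Hl). exact Hl.
Qed.

Lemma smooth_continuity_2d w u t : 0 < t < T -> continuity_2d_pt (dw w F) u t.
Proof.
  intros Ht. destruct HS as [H1 _]. destruct (H1 w u t Ht) as [H _].
  apply continuity_2d_pt_cont2_rel; auto.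
Qed.

Lemma smooth_cont_u k u t : 0 <= t < T -> continuity_pt (fun v => dw (repeat true k) F v t) u.
Proof. intros Ht. eapply dlim_continuity_pt. exact (smooth_pu_repeat k u t Ht). Qed.

Lemma Derive_pt a b : 0 < b < T -> Derive (fun s => F a s) b = pt F a b.
Proof. intros; apply Derive_dlim. exact (smooth_pt nil a b H). Qed.

Lemma Derive_pu a b : 0 < b < T -> Derive (fun z => F z b) a = pu F a b.
Proof. intros; apply Derive_dlim. exact (smooth_pu nil a b H). Qed.

Lemma Derive_pu_pt a b : 0 < b < T -> Derive (fun z => Derive (fun s => F z s) b) a = pu (pt F) a b.
Proof.
  intros Hb. rewrite (Derive_ext _ (fun z => pt F z b)) by (intros; apply Derive_pt; auto).
  apply Derive_dlim. exact (smooth_pu (false :: nil) a b Hb).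
Qed.

Lemma is_derive_pt_pu a b : 0 < b < T ->
  is_derive (fun z => Derive (fun s => F s z) a) b (pt (pu F) a b).
Proof.
  intros Hb. apply (is_derive_ext_loc (fun z => pu F a z)).
  - apply (locally_open_interval _ T b Hb). intros s Hs. symmetry; apply Derive_pu; auto.
  - apply is_derive_Reals. exact (smooth_pt (true :: nil) a b Hb).
Qed.

Lemma pt_pu_comm u t : 0 < t < T -> pt (pu F) u t = pu (pt F) u t.
Proof.
  intros Ht. rewrite <- Derive_pu_pt by auto.
  rewrite <- (is_derive_unique _ _ _ (is_derive_pt_pu u t Ht)). symmetry. apply Schwarz.
  - apply (locally_2d_open_interval_snd _ T u t Ht). intros a b Hb. split; [|split; [|split]].
    + exists (pu F a b). apply is_derive_Reals. exact (smooth_pu nil a b Hb).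
    + exists (pt F a b). apply is_derive_Reals. exact (smooth_pt nil a b Hb).
    + apply (ex_derive_ext (fun z => pt F z b)). intros; symmetry; apply Derive_pt; auto.
      exists (pu (pt F) a b). apply is_derive_Reals. exact (smooth_pu (false :: nil) a b Hb).
    + exists (pt (pu F) a b). apply is_derive_pt_pu; auto.
  - apply (continuity_2d_pt_ext_loc (pu (pt F))).
    + apply (locally_2d_open_interval_snd _ T u t Ht). intros a b Hb. symmetry; apply Derive_pu_pt; auto.
    + exact (smooth_continuity_2d (true :: false :: nil) u t Ht).
  - apply (continuity_2d_pt_ext_loc (pt (pu F))).
    + apply (locally_2d_open_interval_snd _ T u t Ht). intros a b Hb.
      symmetry; apply is_derive_unique, is_derive_pt_pu; auto.
    + exact (smooth_continuity_2d (false :: true :: nil) u t Ht).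
Qed.

End Smooth.

Lemma dlim_RInt_param (P Pt : R -> R -> R) T t : 0 < t < T ->
  (forall v s, 0 < s < T -> derivable_pt_lim (fun z => P v z) s (Pt v s)) ->
  (forall v, continuity_2d_pt Pt v t) ->
  (forall s, 0 < s < T -> forall v, continuity_pt (fun u => P u s) v) ->
  derivable_pt_lim (fun s => RInt (fun v => P v s) 0 1) t (RInt (fun v => Pt v t) 0 1).
Proof.
  intros Ht dP CPt CP. apply is_derive_Reals.
  replace (RInt (fun v => Pt v t) 0 1) with (RInt (fun v => Derive (fun z => P v z) t) 0 1).
  - apply (is_derive_RInt_param (fun z v => P v z)).
    + apply (locally_open_interval _ T t Ht). intros s Hs v _. exists (Pt v s). apply is_derive_Reals, dP; auto.
    + intros v _. apply (continuity_2d_pt_ext_loc (fun a b => Pt b a)).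
      * apply (locally_2d_open_interval_fst _ T t v Ht). intros a b Ha. symmetry. apply Derive_dlim, dP; auto.
      * apply (continuity_2d_pt_swap Pt), CPt.
    + apply (locally_open_interval _ T t Ht). intros s Hs. apply ex_RInt_continuity; [lra|]. intros; apply CP; auto.
  - apply RInt_ext_open; [lra|]. intros v _. apply Derive_dlim, dP; auto.
Qed.

Section Curve.
Variables (x y : R -> R -> R) (T : R).
Hypothesis Sx : smooth_on x T.
Hypothesis Sy : smooth_on y T.
Hypothesis Hreg : forall u t, 0 <= t < T -> 0 < speed x y u t.

Section Slice.
Variable t : R.
Hypothesis Ht : 0 <= t < T.

Lemma speed_neq0 u : speed x y u t <> 0.
Proof. specialize (Hreg u t Ht); lra. Qed.

Lemma speed_sq u : speed x y u t ^ 2 = pu x u t ^ 2 + pu y u t ^ 2.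
Proof. unfold speed. rewrite <- Rsqr_pow2. apply Rsqr_sqrt. nra. Qed.

Lemma dlim_speed u : derivable_pt_lim (fun v => speed x y v t) u
   ((pu x u t * pu (pu x) u t + pu y u t * pu (pu y) u t) / speed x y u t).
Proof.
  assert (H := Hreg u t Ht). unfold speed in *.
  eapply dlim_value.
  - apply dlim_sqrt; [apply dlim_plus; apply dlim_sq|].
    + exact (smooth_pu_repeat x T Sx 1 u t Ht).
    + exact (smooth_pu_repeat y T Sy 1 u t Ht).
    + destruct (Rle_or_lt (pu x u t ^ 2 + pu y u t ^ 2) 0) as [E|E]; auto.
      rewrite sqrt_neg_0 in H; lra.
  - cbn [dw repeat]. field. lra.
Qed.

Lemma cont_speed u : continuity_pt (fun v => speed x y v t) u.
Proof. eapply dlim_continuity_pt; apply dlim_speed. Qed.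

Lemma dlim_ds F u : smooth_on F T -> derivable_pt_lim (fun v => ds x y F v t) u
  ((pu (pu F) u t * speed x y u t
     - pu F u t * ((pu x u t * pu (pu x) u t + pu y u t * pu (pu y) u t) / speed x y u t))
   / speed x y u t ^ 2).
Proof.
  intros SF. unfold ds. apply (dlim_div (fun v => pu F v t) (fun v => speed x y v t)).
  - exact (smooth_pu_repeat F T SF 1 u t Ht).
  - apply dlim_speed.
  - apply speed_neq0.
Qed.

Lemma kappa_formula u :
  kappa x y u t = (pu x u t * pu (pu y) u t - pu y u t * pu (pu x) u t) / speed x y u t ^ 3.
Proof.
  unfold kappa, nux, nuy.
  change (ds x y (ds x y x) u t) with (deriv1 (fun v => ds x y x v t) u / speed x y u t).
  change (ds x y (ds x y y) u t) with (deriv1 (fun v => ds x y y v t) u / speed x y u t).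
  rewrite (deriv1_unique _ _ _ (dlim_ds x u Sx)), (deriv1_unique _ _ _ (dlim_ds y u Sy)).
  unfold ds. assert (H := speed_neq0 u). field. auto.
Qed.

Let Cx k u := smooth_cont_u x T Sx k u t Ht.
Let Cy k u := smooth_cont_u y T Sy k u t Ht.

Lemma cont_kappa u : continuity_pt (fun v => kappa x y v t) u.
Proof.
  eapply cont_ext. intros v; symmetry; apply kappa_formula.
  assert (H1 := Cx 1 u). assert (H2 := Cx 2 u). assert (H3 := Cy 1 u). assert (H4 := Cy 2 u).
  assert (H5 := cont_speed u). simpl in H1, H2, H3, H4.
  apply cont_div; [cont|cont|apply pow_nonzero, speed_neq0].
Qed.

Lemma ex_dlim_kappa u : ex_dlim (fun v => kappa x y v t) u.
Proof.
  eapply ex_dlim_ext. intros v; symmetry; apply kappa_formula.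
  apply ex_dlim_div; [apply ex_dlim_minus; apply ex_dlim_mult| |apply pow_nonzero, speed_neq0].
  1-4: eexists; first [exact (smooth_pu_repeat x T Sx 1 u t Ht) | exact (smooth_pu_repeat x T Sx 2 u t Ht)
                     | exact (smooth_pu_repeat y T Sy 1 u t Ht) | exact (smooth_pu_repeat y T Sy 2 u t Ht)].
  apply ex_dlim_pow. eexists; apply dlim_speed.
Qed.

Lemma Len_RInt : Len x y t = RInt (fun v => speed x y v t) 0 1.
Proof.
  unfold Len, int_s. rewrite integ_RInt.
  - apply RInt_ext_open; [lra|]. intros; ring.
  - apply ex_RInt_continuity; [lra|]. intros; apply cont_mult; [apply cont_const|apply cont_speed].
Qed.

(* [nu * speed = (- pu y, pu x)], so the area integrand needs no division *)
Lemma Area_RInt :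
  Area x y t = - (1 / 2) * RInt (fun v => y v t * pu x v t - x v t * pu y v t) 0 1.
Proof.
  unfold Area, int_s.
  replace (fun u : R => (x u t * nux x y u t + y u t * nuy x y u t) * speed x y u t)
    with (fun v => y v t * pu x v t - x v t * pu y v t).
  - rewrite integ_RInt; [reflexivity|].
    apply ex_RInt_continuity; [lra|]. intros z _.
    assert (H1 := Cx 0 z). assert (H2 := Cx 1 z). assert (H3 := Cy 0 z). assert (H4 := Cy 1 z).
    simpl in *. cont.
  - apply functional_extensionality. intros v. unfold nux, nuy, ds.
    assert (H := speed_neq0 v). field. auto.
Qed.

End Slice.
End Curve.

Section NormalFlow.
Variables (x y : R -> R -> R) (T : R) (V : R -> R -> R).
Hypothesis Sx : smooth_on x T.
Hypothesis Sy : smooth_on y T.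
Hypothesis Hreg : forall u t, 0 <= t < T -> 0 < speed x y u t.
Hypothesis Hflow : forall u t, 0 < t < T ->
  pt x u t = V u t * nux x y u t /\ pt y u t = V u t * nuy x y u t.
Hypothesis HV : forall t, 0 < t < T -> forall u, ex_dlim (fun v => V v t) u.
Hypothesis Hper : forall u t, 0 <= t < T -> x (u + 1) t = x u t /\ y (u + 1) t = y u t.

Lemma dlim_speed_t u t : 0 < t < T -> derivable_pt_lim (fun s => speed x y u s) t
   ((pu x u t * pt (pu x) u t + pu y u t * pt (pu y) u t) / speed x y u t).
Proof.
  intros Ht. assert (H := Hreg u t ltac:(lra)). unfold speed in *.
  eapply dlim_value.
  - apply dlim_sqrt; [apply dlim_plus; apply dlim_sq|].
    + exact (smooth_pt x T Sx (true :: nil) u t Ht).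
    + exact (smooth_pt y T Sy (true :: nil) u t Ht).
    + destruct (Rle_or_lt (pu x u t ^ 2 + pu y u t ^ 2) 0) as [E|E]; auto.
      rewrite sqrt_neg_0 in H; lra.
  - cbn [dw]. field. lra.
Qed.

(* [d speed / dt = - V kappa speed]: the time derivative of [pu f] is the
   [u]-derivative of [pt f = V nu] (Schwarz), and [pu nu = - kappa pu f]. *)
Lemma speed_variation u t : 0 < t < T ->
  (pu x u t * pt (pu x) u t + pu y u t * pt (pu y) u t) / speed x y u t
  = - V u t * kappa x y u t * speed x y u t.
Proof.
  intros Ht. assert (Ht' : 0 <= t < T) by lra.
  rewrite (pt_pu_comm x T Sx u t Ht), (pt_pu_comm y T Sy u t Ht).
  destruct (HV t Ht u) as [Vd HVd].
  assert (Hx : derivable_pt_lim (fun v => pt x v t) u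
     (Vd * nux x y u t + V u t * - ((pu (pu y) u t * speed x y u t - pu y u t * ((pu x u t * pu (pu x) u t + pu y u t * pu (pu y) u t) / speed x y u t)) / speed x y u t ^ 2))).
  { apply (dlim_ext (fun v => V v t * nux x y v t)). intros v; symmetry; apply Hflow; auto.
    apply (dlim_mult (fun v => V v t) (fun v => nux x y v t)); auto.
    apply (dlim_opp (fun v => ds x y y v t)). apply (dlim_ds x y T Sx Sy Hreg t Ht' y u Sy). }
  assert (Hy : derivable_pt_lim (fun v => pt y v t) u
     (Vd * nuy x y u t + V u t * ((pu (pu x) u t * speed x y u t - pu x u t * ((pu x u t * pu (pu x) u t + pu y u t * pu (pu y) u t) / speed x y u t)) / speed x y u t ^ 2))).
  { apply (dlim_ext (fun v => V v t * nuy x y v t)). intros v; symmetry; apply Hflow; auto.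
    apply (dlim_mult (fun v => V v t) (fun v => nuy x y v t)); auto.
    apply (dlim_ds x y T Sx Sy Hreg t Ht' x u Sx). }
  change (pu (pt x) u t) with (deriv1 (fun v => pt x v t) u).
  change (pu (pt y) u t) with (deriv1 (fun v => pt y v t) u).
  rewrite (deriv1_unique _ _ _ Hx), (deriv1_unique _ _ _ Hy).
  rewrite (kappa_formula x y T Sx Sy Hreg t Ht'). unfold nux, nuy, ds.
  assert (H := speed_neq0 x y T Hreg t Ht' u). field. auto.
Qed.

Lemma dlim_Len t : 0 < t < T ->
  derivable_pt_lim (Len x y) t (- RInt (fun u => V u t * kappa x y u t * speed x y u t) 0 1).
Proof.
  intros Ht. assert (Ht' : 0 <= t < T) by lra.
  apply (dlim_ext_loc (fun s => RInt (fun v => speed x y v s) 0 1)).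
  { apply (locally_open_interval _ T t Ht). intros s Hs. symmetry; apply (Len_RInt x y T Sx Sy Hreg s); lra. }
  eapply dlim_value.
  - apply (dlim_RInt_param (fun v s => speed x y v s)
      (fun v s => (pu x v s * pt (pu x) v s + pu y v s * pt (pu y) v s) / speed x y v s) T t Ht).
    + intros v s Hs. apply dlim_speed_t; auto.
    + intros v. apply continuity_2d_pt_div; [|unfold speed; apply continuity_2d_pt_sqrt; [|nra]|].
      * apply continuity_2d_pt_plus; apply continuity_2d_pt_mult.
        exact (smooth_continuity_2d x T Sx (true :: nil) v t Ht).
        exact (smooth_continuity_2d x T Sx (false :: true :: nil) v t Ht).
        exact (smooth_continuity_2d y T Sy (true :: nil) v t Ht).
        exact (smooth_continuity_2d y T Sy (false :: true :: nil) v t Ht).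
      * apply continuity_2d_pt_plus; apply continuity_2d_pt_pow.
        exact (smooth_continuity_2d x T Sx (true :: nil) v t Ht).
        exact (smooth_continuity_2d y T Sy (true :: nil) v t Ht).
      * apply (speed_neq0 x y T Hreg t Ht').
    + intros s Hs. apply (cont_speed x y T Sx Sy Hreg s); lra.
  - rewrite (RInt_ext_open _ (fun u => (-1) * (V u t * kappa x y u t * speed x y u t))); [|lra|].
    + rewrite RInt_scalR; [ring|]. apply ex_RInt_continuity; [lra|]. intros z _.
      assert (CV : continuity_pt (fun v => V v t) z)
        by (destruct (HV t Ht z) as [l Hl]; eapply dlim_continuity_pt; eauto).
      assert (Ck := cont_kappa x y T Sx Sy Hreg t Ht' z). assert (Cs := cont_speed x y T Sx Sy Hreg t Ht' z).
      cont.
    + intros u _. rewrite speed_variation by auto. ring.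
Qed.

Lemma pt_periodic F t : smooth_on F T -> (forall u s, 0 <= s < T -> F (u + 1) s = F u s) ->
  0 < t < T -> pt F 1 t = pt F 0 t.
Proof.
  intros HS HP Ht. unfold pt. apply deriv1_unique. apply (dlim_ext_loc (fun s => F 0 s)).
  - apply (locally_open_interval _ T t Ht). intros s Hs. rewrite <- (HP 0 s) by lra. rewrite Rplus_0_l. reflexivity.
  - exact (smooth_pt F T HS nil 0 t Ht).
Qed.

Lemma RInt_parts_periodic F G t : 0 < t < T -> smooth_on F T -> smooth_on G T ->
  (forall u s, 0 <= s < T -> F (u + 1) s = F u s) -> (forall u s, 0 <= s < T -> G (u + 1) s = G u s) ->
  RInt (fun u => G u t * pu (pt F) u t) 0 1 = - RInt (fun u => pu G u t * pt F u t) 0 1.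
Proof.
  intros Ht SF SG PF PG. assert (Ht' : 0 <= t < T) by lra.
  assert (CF1 : forall u, continuity_pt (fun v => pt F v t) u)
    by (intros; eapply dlim_continuity_pt; exact (smooth_pu F T SF (false :: nil) u t Ht)).
  assert (CF2 : forall u, continuity_pt (fun v => pu (pt F) v t) u)
    by (intros; apply continuity_2d_pt_fst; exact (smooth_continuity_2d F T SF (true :: false :: nil) u t Ht)).
  assert (CG0 := smooth_cont_u G T SG 0). assert (CG1 := smooth_cont_u G T SG 1). simpl in CG0, CG1.
  assert (E : RInt (fun u => pu G u t * pt F u t) 0 1 + RInt (fun u => G u t * pu (pt F) u t) 0 1
              = G 1 t * pt F 1 t - G 0 t * pt F 0 t).
  { rewrite <- RInt_plusR by (apply ex_RInt_continuity; [lra|]; intros; cont).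
    apply (RInt_dlim (fun u => G u t * pt F u t)); [lra| |].
    - intros u _. apply (dlim_mult (fun v => G v t) (fun v => pt F v t)).
      exact (smooth_pu_repeat G T SG 0 u t Ht'). exact (smooth_pu F T SF (false :: nil) u t Ht).
    - intros; cont. }
  rewrite (pt_periodic F t SF PF Ht) in E.
  rewrite <- (PG 0 t Ht'), Rplus_0_l in E. lra.
Qed.

Lemma flow_cross_speed u t : 0 < t < T ->
  pt y u t * pu x u t - pt x u t * pu y u t = V u t * speed x y u t.
Proof.
  intros Ht. destruct (Hflow u t Ht) as [E1 E2]. rewrite E1, E2. unfold nux, nuy, ds.
  assert (H := speed_neq0 x y T Hreg t ltac:(lra) u).
  transitivity (V u t * (pu x u t ^ 2 + pu y u t ^ 2) / speed x y u t); [field; auto|].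
  rewrite <- (speed_sq x y t u). field. auto.
Qed.

(* After Schwarz, the terms [y pu (pt x)] and [x pu (pt y)] are integrated by
   parts; each then contributes one more copy of [V speed]. *)
Lemma RInt_Area_integrand_pt t : 0 < t < T ->
  RInt (fun v => pt y v t * pu x v t + y v t * pt (pu x) v t
                 - (pt x v t * pu y v t + x v t * pt (pu y) v t)) 0 1
  = 2 * RInt (fun u => V u t * speed x y u t) 0 1.
Proof.
  intros Ht. assert (Ht' : 0 <= t < T) by lra.
  assert (CV : forall u, continuity_pt (fun v => V v t) u)
    by (intros u; destruct (HV t Ht u) as [l Hl]; eapply dlim_continuity_pt; eauto).
  assert (Cs := cont_speed x y T Sx Sy Hreg t Ht').
  assert (Cpt : forall F u, smooth_on F T -> continuity_pt (fun v => pt F v t) u)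
    by (intros; eapply dlim_continuity_pt; exact (smooth_pu F T H (false :: nil) u t Ht)).
  assert (Cpupt : forall F u, smooth_on F T -> continuity_pt (fun v => pu (pt F) v t) u)
    by (intros; apply continuity_2d_pt_fst; exact (smooth_continuity_2d F T H (true :: false :: nil) u t Ht)).
  assert (Cx0 := fun u => smooth_cont_u x T Sx 0 u t Ht').
  assert (Cx1 := fun u => smooth_cont_u x T Sx 1 u t Ht').
  assert (Cy0 := fun u => smooth_cont_u y T Sy 0 u t Ht').
  assert (Cy1 := fun u => smooth_cont_u y T Sy 1 u t Ht').
  simpl in Cx0, Cx1, Cy0, Cy1.
  assert (Cpx := fun u => Cpt x u Sx). assert (Cpy := fun u => Cpt y u Sy).
  assert (Cppx := fun u => Cpupt x u Sx). assert (Cppy := fun u => Cpupt y u Sy).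
  assert (EX : forall f, (forall u, continuity_pt f u) -> ex_RInt f 0 1)
    by (intros; apply ex_RInt_continuity; auto; lra).
  assert (Px : forall u s, 0 <= s < T -> x (u + 1) s = x u s) by (intros; apply Hper; auto).
  assert (Py : forall u s, 0 <= s < T -> y (u + 1) s = y u s) by (intros; apply Hper; auto).
  rewrite (RInt_ext_open _ (fun u => (pt y u t * pu x u t - pt x u t * pu y u t)
                                    + y u t * pu (pt x) u t - x u t * pu (pt y) u t)); [|lra|].
  2: { intros u _. rewrite (pt_pu_comm x T Sx u t Ht), (pt_pu_comm y T Sy u t Ht). ring. }
  rewrite RInt_minusR, RInt_plusR by (apply EX; intros; cont).
  rewrite (RInt_parts_periodic x y t Ht Sx Sy Px Py), (RInt_parts_periodic y x t Ht Sy Sx Py Px).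
  rewrite (RInt_ext_open _ _ 0 1 ltac:(lra) (fun u _ => flow_cross_speed u t Ht)).
  assert (E : RInt (fun u => pu x u t * pt y u t) 0 1 - RInt (fun u => pu y u t * pt x u t) 0 1
              = RInt (fun u => V u t * speed x y u t) 0 1).
  { rewrite <- RInt_minusR by (apply EX; intros; cont). apply RInt_ext_open; [lra|].
    intros u _. rewrite <- (flow_cross_speed u t Ht). ring. }
  lra.
Qed.

Lemma dlim_Area t : 0 < t < T ->
  derivable_pt_lim (Area x y) t (- RInt (fun u => V u t * speed x y u t) 0 1).
Proof.
  intros Ht.
  set (P := fun v s => y v s * pu x v s - x v s * pu y v s).
  set (Pt := fun v s => pt y v s * pu x v s + y v s * pt (pu x) v s
                        - (pt x v s * pu y v s + x v s * pt (pu y) v s)).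
  apply (dlim_ext_loc (fun s => - (1 / 2) * RInt (fun v => P v s) 0 1)).
  { apply (locally_open_interval _ T t Ht). intros s Hs.
    symmetry; apply (Area_RInt x y T Sx Sy Hreg s); lra. }
  eapply dlim_value; [apply dlim_scal, (dlim_RInt_param P Pt T t Ht)|].
  - intros v s Hs. unfold P, Pt. apply dlim_minus; apply dlim_mult.
    exact (smooth_pt y T Sy nil v s Hs). exact (smooth_pt x T Sx (true :: nil) v s Hs).
    exact (smooth_pt x T Sx nil v s Hs). exact (smooth_pt y T Sy (true :: nil) v s Hs).
  - intros v. unfold Pt.
    apply continuity_2d_pt_minus; apply continuity_2d_pt_plus; apply continuity_2d_pt_mult.
    exact (smooth_continuity_2d y T Sy (false :: nil) v t Ht). exact (smooth_continuity_2d x T Sx (true :: nil) v t Ht).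
    exact (smooth_continuity_2d y T Sy nil v t Ht). exact (smooth_continuity_2d x T Sx (false :: true :: nil) v t Ht).
    exact (smooth_continuity_2d x T Sx (false :: nil) v t Ht). exact (smooth_continuity_2d y T Sy (true :: nil) v t Ht).
    exact (smooth_continuity_2d x T Sx nil v t Ht). exact (smooth_continuity_2d y T Sy (false :: true :: nil) v t Ht).
  - intros s Hs v. unfold P.
    assert (C0 := smooth_cont_u x T Sx 0 v s ltac:(lra)). assert (C1 := smooth_cont_u x T Sx 1 v s ltac:(lra)).
    assert (C2 := smooth_cont_u y T Sy 0 v s ltac:(lra)). assert (C3 := smooth_cont_u y T Sy 1 v s ltac:(lra)).
    simpl in C0, C1, C2, C3. cont.
  - unfold Pt. rewrite RInt_Area_integrand_pt by auto. field.
Qed.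

End NormalFlow.

(* Quantities of the flow are only controlled on [0, T); composing with
   [Rmax 0] extends them constantly to the left of 0, which turns
   right-continuity at 0 into continuity there. *)
Definition right_continuous0 (h : R -> R) := forall eps, 0 < eps -> exists del, 0 < del /\
  forall s, 0 <= s < del -> Rabs (h s - h 0) < eps.

Lemma right_continuous0_scal h k c T : 0 < T -> (forall s, 0 <= s < T -> h s = c * k s) ->
  right_continuous0 k -> right_continuous0 h.
Proof.
  intros HT E Hk eps Heps.
  assert (Hc : 0 < Rabs c + 1) by (assert (0 <= Rabs c) by apply Rabs_pos; lra).
  destruct (Hk (eps / (Rabs c + 1))) as [d [Hd H]]; [apply Rdiv_lt_0_compat; lra|].
  exists (Rmin d T). split; [apply Rmin_pos; lra|]. intros s Hs.
  assert (Rmin d T <= d) by apply Rmin_l. assert (Rmin d T <= T) by apply Rmin_r.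
  rewrite !E by lra. replace (c * k s - c * k 0) with (c * (k s - k 0)) by ring.
  rewrite Rabs_mult. assert (H2 := H s ltac:(lra)).
  assert (0 <= Rabs c) by apply Rabs_pos.
  apply Rle_lt_trans with (Rabs c * (eps / (Rabs c + 1))); [apply Rmult_le_compat_l; lra|].
  apply Rlt_le_trans with ((Rabs c + 1) * (eps / (Rabs c + 1))).
  - assert (0 < eps / (Rabs c + 1)) by (apply Rdiv_lt_0_compat; lra). nra.
  - right; field; lra.
Qed.

Lemma continuity_2d_pt_clamp F T u : 0 < T -> cont2_rel (fun s => 0 <= s < T) F u 0 ->
  continuity_2d_pt (fun a s => F a (Rmax 0 s)) u 0.
Proof.
  intros HT H eps. destruct (H eps (cond_pos eps)) as [del [Hd H']].
  assert (Hm : 0 < Rmin del T) by (apply Rmin_pos; lra).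
  exists (mkposreal _ Hm). intros a s Ha Hs. simpl in *.
  assert (Rmin del T <= del) by apply Rmin_l. assert (Rmin del T <= T) by apply Rmin_r.
  rewrite Rmax_left with (x := 0) (y := 0) by lra.
  rewrite Rminus_0_r in *. apply Rabs_def2 in Hs. apply H'.
  - split; [apply Rmax_l|]. unfold Rmax; destruct Rle_dec; lra.
  - lra.
  - unfold Rmax; destruct Rle_dec.
    + rewrite Rabs_right; lra.
    + rewrite Rminus_diag, Rabs_R0; lra.
Qed.

Lemma right_continuous0_RInt (F : R -> R -> R) T : 0 < T ->
  (forall u, 0 <= u <= 1 -> continuity_2d_pt (fun a s => F a (Rmax 0 s)) u 0) ->
  (forall s, 0 <= s < T -> forall u, continuity_pt (fun v => F v s) u) ->
  right_continuous0 (fun s => RInt (fun v => F v s) 0 1).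
Proof.
  intros HT Hc Hu eps Heps.
  assert (He2 : 0 < eps / 2) by lra.
  destruct (uniform_continuity_2d_1d (fun a s => F a (Rmax 0 s)) 0 1 0 Hc (mkposreal _ He2)) as [d Hd].
  assert (Hm : 0 < Rmin d T) by (apply Rmin_pos; [apply cond_pos|lra]).
  exists (Rmin d T). split; auto. intros s Hs.
  assert (Rmin d T <= d) by apply Rmin_l. assert (Rmin d T <= T) by apply Rmin_r.
  rewrite <- RInt_minusR by (apply ex_RInt_continuity; [lra|]; intros; apply Hu; lra).
  eapply Rle_lt_trans; [apply abs_RInt_le_const with (M := eps / 2)|lra].
  - lra.
  - apply ex_RInt_continuity; [lra|]; intros; apply cont_minus; apply Hu; lra.
  - intros v Hv. simpl in Hd.
    assert (E := Hd v 0 v s Hv ltac:(lra) Hv ltac:(lra) ltac:(rewrite Rminus_diag, Rabs_R0; apply cond_pos)).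
    rewrite Rmax_right in E by lra. rewrite Rmax_left in E by lra. left; exact E.
Qed.

Lemma continuity_pt_Rmax0 z : continuity_pt (fun s => Rmax 0 s) z.
Proof.
  apply (cont_ext (fun s => (s + Rabs s) / 2)).
  - intros s. unfold Rmax; destruct Rle_dec; [rewrite Rabs_right|rewrite Rabs_left]; lra.
  - apply cont_div; [apply cont_plus; [apply continuity_pt_id|apply Rcontinuity_abs]|apply cont_const|lra].
Qed.

Lemma continuity_pt_clamp h T : 0 < T -> right_continuous0 h -> (forall s, 0 < s < T -> continuity_pt h s) ->
  forall s, 0 <= s < T -> continuity_pt (fun z => h (Rmax 0 z)) s.
Proof.
  intros HT Hr Hc s Hs. destruct (Req_dec s 0) as [->|Hs0].
  - intros eps Heps. destruct (Hr eps Heps) as [del [Hd H]].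
    exists del. split; auto. intros z [_ Hz]. simpl in *. unfold R_dist in *.
    rewrite Rminus_0_r in Hz. rewrite (Rmax_left 0 0) by lra.
    unfold Rmax; destruct Rle_dec.
    + apply H. apply Rabs_def2 in Hz; lra.
    + rewrite Rminus_diag, Rabs_R0; lra.
  - apply (cont_comp h (fun z => Rmax 0 z)); [apply continuity_pt_Rmax0|].
    rewrite Rmax_right by lra. apply Hc; lra.
Qed.

Lemma MVT_clamp h dh T t : 0 < t < T ->
  (forall s, 0 <= s < T -> continuity_pt (fun z => h (Rmax 0 z)) s) ->
  (forall s, 0 < s < T -> derivable_pt_lim h s (dh s)) ->
  exists c, 0 <= c <= t /\ h t - h 0 = dh c * t.
Proof.
  intros Ht Hc Hd.
  destruct (MVT_gen (fun z => h (Rmax 0 z)) 0 t dh) as [c [Hc1 Hc2]].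
  - rewrite Rmin_left, Rmax_right by lra. intros z Hz.
    apply (is_derive_ext_loc h).
    + apply (locally_open_interval _ T z); [lra|]. intros s Hs. rewrite Rmax_right; lra.
    + apply is_derive_Reals, Hd; lra.
  - rewrite Rmin_left, Rmax_right by lra. intros z Hz. apply Hc; lra.
  - rewrite Rmin_left, Rmax_right in Hc1 by lra. exists c. split; auto.
    rewrite Rmax_right in Hc2 by lra. rewrite Rmax_left in Hc2 by lra. lra.
Qed.

Lemma pos_of_nonvanishing h T t : 0 < t < T ->
  (forall s, 0 <= s < T -> continuity_pt (fun z => h (Rmax 0 z)) s) ->
  0 < h 0 -> (forall s, 0 <= s < T -> h s <> 0) -> 0 < h t.
Proof.
  intros Ht Hc H0 Hn. destruct (Rlt_or_le 0 (h t)) as [E|E]; auto. exfalso.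
  assert (E' : h t < 0) by (destruct E; auto; exfalso; apply (Hn t); lra).
  destruct (Ranalysis5.IVT_interv (fun z => - h (Rmax 0 z)) 0 t) as [z [Hz Hz0]].
  - intros a Ha. apply cont_opp. apply Hc; lra.
  - lra.
  - rewrite Rmax_left by lra. lra.
  - rewrite Rmax_right by lra. lra.
  - apply (Hn (Rmax 0 z)); [split; [apply Rmax_l|rewrite Rmax_right by lra; lra]|lra].
Qed.

Section ClassicalSolution.
Variables (n : nat) (p : flow) (x y : R -> R -> R) (T : R).
Hypothesis Hn : (1 <= n)%nat.
Hypothesis HT : 0 < T.
Hypothesis Sx : smooth_on x T.
Hypothesis Sy : smooth_on y T.
Hypothesis Hper : forall u t, 0 <= t < T -> x (u + 1) t = x u t /\ y (u + 1) t = y u t.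
Hypothesis Hreg : forall u t, 0 <= t < T -> 0 < speed x y u t.
Hypothesis HK : forall t, 0 <= t < T -> Ktot x y t = 2 * PI * INR n.
Hypothesis Hflow : forall u t, 0 < t < T ->
  pt x u t = (ktil x y u t - gterm p x y t / Len x y t) * nux x y u t /\
  pt y u t = (ktil x y u t - gterm p x y t / Len x y t) * nuy x y u t.

Definition normal_velocity u t := ktil x y u t - gterm p x y t / Len x y t.

Lemma ex_dlim_normal_velocity t : 0 < t < T -> forall u, ex_dlim (fun v => normal_velocity v t) u.
Proof.
  intros Ht u. unfold normal_velocity, ktil.
  apply (ex_dlim_minus (fun v => kappa x y v t - Ktot x y t / Len x y t) (fun _ => gterm p x y t / Len x y t));
    [apply (ex_dlim_minus (fun v => kappa x y v t) (fun _ => Ktot x y t / Len x y t))|]; try apply ex_dlim_const.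
  apply (ex_dlim_kappa x y T Sx Sy Hreg t); lra.
Qed.

Definition ktil_sq_int s := int_s x y (fun u t => ktil x y u t ^ 2) s.
Definition kappa_sq_int s := RInt (fun u => kappa x y u s ^ 2 * speed x y u s) 0 1.

Section Slice.
Variable s : R.
Hypothesis Hs : 0 <= s < T.

Let Cs := cont_speed x y T Sx Sy Hreg s Hs.
Let Ck := cont_kappa x y T Sx Sy Hreg s Hs.
Let EX f : (forall u, continuity_pt f u) -> ex_RInt f 0 1.
Proof. intros; apply ex_RInt_continuity; auto; lra. Qed.

Lemma Len_pos : 0 < Len x y s.
Proof.
  rewrite (Len_RInt x y T Sx Sy Hreg s Hs). apply RInt_gt_0; [lra| |].
  - intros; apply Hreg; auto.
  - intros; apply continuity_pt_continuous, Cs.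
Qed.

Lemma Ktot_RInt : Ktot x y s = RInt (fun u => kappa x y u s * speed x y u s) 0 1.
Proof. unfold Ktot, int_s. apply integ_RInt. apply EX. intros; apply cont_mult; [apply Ck|apply Cs]. Qed.

Lemma ktil_sq_int_eq : ktil_sq_int s = kappa_sq_int s - Ktot x y s ^ 2 / Len x y s.
Proof.
  assert (HL := Len_pos). set (c := Ktot x y s / Len x y s).
  unfold ktil_sq_int, int_s. rewrite integ_RInt by (apply EX; intros; unfold ktil; cont).
  rewrite (RInt_ext_open _ (fun u => (kappa x y u s ^ 2 * speed x y u s
      + (-2 * c) * (kappa x y u s * speed x y u s)) + c ^ 2 * speed x y u s)); [|lra|].
  - rewrite RInt_plusR, RInt_plusR, RInt_scalR, RInt_scalR by (apply EX; intros; cont).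
    rewrite <- Ktot_RInt, <- (Len_RInt x y T Sx Sy Hreg s Hs). unfold kappa_sq_int, c. field. lra.
  - intros u _. unfold ktil. fold c. ring.
Qed.

Lemma ktil_sq_int_nonneg : 0 <= ktil_sq_int s.
Proof.
  unfold ktil_sq_int, int_s. rewrite integ_RInt by (apply EX; intros; unfold ktil; cont).
  apply RInt_ge_0; [lra|apply EX; intros; unfold ktil; cont|].
  intros u _. apply Rmult_le_pos; [apply pow2_ge_0|left; apply Hreg; auto].
Qed.

Lemma RInt_normal_velocity :
  @eq R (RInt (fun u => normal_velocity u s * speed x y u s) 0 1) (- gterm p x y s).
Proof.
  assert (HL := Len_pos). set (c := Ktot x y s / Len x y s + gterm p x y s / Len x y s).
  rewrite (RInt_ext_open _ (fun u => kappa x y u s * speed x y u s + (- c) * speed x y u s)); [|lra|].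
  - rewrite RInt_plusR, RInt_scalR by (apply EX; intros; cont).
    rewrite <- Ktot_RInt, <- (Len_RInt x y T Sx Sy Hreg s Hs). unfold c. field. lra.
  - intros u _. unfold normal_velocity, ktil, c. ring.
Qed.

Lemma RInt_normal_velocity_kappa :
  @eq R (RInt (fun u => normal_velocity u s * kappa x y u s * speed x y u s) 0 1)
    (kappa_sq_int s - (Ktot x y s / Len x y s + gterm p x y s / Len x y s) * Ktot x y s).
Proof.
  set (c := Ktot x y s / Len x y s + gterm p x y s / Len x y s).
  rewrite (RInt_ext_open _ (fun u => kappa x y u s ^ 2 * speed x y u s
      + (- c) * (kappa x y u s * speed x y u s))); [|lra|].
  - rewrite RInt_plusR, RInt_scalR by (apply EX; intros; cont).
    rewrite <- Ktot_RInt. unfold kappa_sq_int. ring.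
  - intros u _. unfold normal_velocity, ktil, c. ring.
Qed.

Lemma isoperimetric_slice : 4 * PI * Area x y s <= Len x y s ^ 2.
Proof.
  assert (P0 := Hper 0 s Hs). rewrite Rplus_0_l in P0. destruct P0 as [Px Py].
  assert (Cx := fun k u => smooth_cont_u x T Sx k u s Hs).
  assert (Cy := fun k u => smooth_cont_u y T Sy k u s Hs).
  assert (H := isoperimetric_inequality (fun v => x v s) (fun v => y v s) (fun v => pu x v s) (fun v => pu y v s)
     (fun u => smooth_pu_repeat x T Sx 0 u s Hs) (fun u => smooth_pu_repeat y T Sy 0 u s Hs)
     (Cx 1%nat) (Cy 1%nat) Px Py (fun u => Hreg u s Hs)).
  cbv beta in H. fold (speed x y) in H.
  rewrite (Area_RInt x y T Sx Sy Hreg s Hs), (Len_RInt x y T Sx Sy Hreg s Hs).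
  assert (C0 := Cx 0%nat). assert (C1 := Cy 0%nat). assert (C2 := Cx 1%nat). assert (C3 := Cy 1%nat).
  simpl in C0, C1, C2, C3.
  rewrite (RInt_ext_open (fun v => y v s * pu x v s - x v s * pu y v s)
             (fun u => (-1) * (x u s * pu y u s - y u s * pu x u s))) by (lra || (intros; ring)).
  rewrite RInt_scalR by (apply EX; intros; cont).
  replace (4 * PI * (- (1 / 2) * (-1 * RInt (fun u => x u s * pu y u s - y u s * pu x u s) 0 1)))
    with (4 * PI * (1 / 2 * RInt (fun u => x u s * pu y u s - y u s * pu x u s) 0 1)) by field.
  exact H.
Qed.

End Slice.

Hypothesis HJ : p = JP -> forall t, 0 <= t < T -> Area x y t <> 0.
Hypothesis HA0 : 0 < Area x y 0.

Definition dLen s := - ktil_sq_int s + gterm p x y s * Ktot x y s / Len x y s.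

Lemma dlim_Area_sol s : 0 < s < T -> derivable_pt_lim (Area x y) s (gterm p x y s).
Proof.
  intros Hs. eapply dlim_value.
  - apply (dlim_Area x y T normal_velocity Sx Sy Hreg Hflow ex_dlim_normal_velocity Hper s Hs).
  - rewrite RInt_normal_velocity by lra. ring.
Qed.

Lemma dlim_Len_sol s : 0 < s < T -> derivable_pt_lim (Len x y) s (dLen s).
Proof.
  intros Hs. assert (Hs' : 0 <= s < T) by lra. eapply dlim_value.
  - apply (dlim_Len x y T normal_velocity Sx Sy Hreg Hflow ex_dlim_normal_velocity s Hs).
  - rewrite RInt_normal_velocity_kappa by lra. unfold dLen. rewrite ktil_sq_int_eq by lra.
    assert (H := Len_pos s Hs'). field. lra.
Qed.

Lemma right_continuous0_Area : right_continuous0 (Area x y).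
Proof.
  apply (right_continuous0_scal _ (fun s => RInt (fun v => y v s * pu x v s - x v s * pu y v s) 0 1)
           (- (1 / 2)) T HT); [intros; apply (Area_RInt x y T Sx Sy Hreg); auto|].
  apply (right_continuous0_RInt (fun v s => y v s * pu x v s - x v s * pu y v s) T HT).
  - intros u _. apply continuity_2d_pt_minus; apply continuity_2d_pt_mult.
    + exact (continuity_2d_pt_clamp _ T u HT (smooth_cont_at0 y T Sy 0 u HT)).
    + exact (continuity_2d_pt_clamp _ T u HT (smooth_cont_at0 x T Sx 1 u HT)).
    + exact (continuity_2d_pt_clamp _ T u HT (smooth_cont_at0 x T Sx 0 u HT)).
    + exact (continuity_2d_pt_clamp _ T u HT (smooth_cont_at0 y T Sy 1 u HT)).
  - intros s Hs u.
    assert (C0 := smooth_cont_u x T Sx 0 u s Hs). assert (C1 := smooth_cont_u y T Sy 0 u s Hs).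
    assert (C2 := smooth_cont_u x T Sx 1 u s Hs). assert (C3 := smooth_cont_u y T Sy 1 u s Hs).
    simpl in C0, C1, C2, C3. cont.
Qed.

Lemma right_continuous0_Len : right_continuous0 (Len x y).
Proof.
  apply (right_continuous0_scal _ (fun s => RInt (fun v => speed x y v s) 0 1) 1 T HT).
  { intros; rewrite Rmult_1_l; apply (Len_RInt x y T Sx Sy Hreg); auto. }
  apply (right_continuous0_RInt (fun v s => speed x y v s) T HT).
  - intros u _. unfold speed. apply continuity_2d_pt_sqrt; [|nra].
    apply continuity_2d_pt_plus; apply continuity_2d_pt_pow.
    + exact (continuity_2d_pt_clamp _ T u HT (smooth_cont_at0 x T Sx 1 u HT)).
    + exact (continuity_2d_pt_clamp _ T u HT (smooth_cont_at0 y T Sy 1 u HT)).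
  - intros s Hs u. apply (cont_speed x y T Sx Sy Hreg s Hs).
Qed.

Lemma continuity_clamp_Area s : 0 <= s < T -> continuity_pt (fun z => Area x y (Rmax 0 z)) s.
Proof.
  apply (continuity_pt_clamp _ T HT right_continuous0_Area).
  intros; eapply dlim_continuity_pt; apply dlim_Area_sol; auto.
Qed.

Lemma continuity_clamp_Len s : 0 <= s < T -> continuity_pt (fun z => Len x y (Rmax 0 z)) s.
Proof.
  apply (continuity_pt_clamp _ T HT right_continuous0_Len).
  intros; eapply dlim_continuity_pt; apply dlim_Len_sol; auto.
Qed.

Lemma INR_n_ge1 : 1 <= INR n.
Proof. apply (le_INR 1); auto. Qed.

Lemma Ktot_pos s : 0 <= s < T -> 0 < Ktot x y s.
Proof. intros Hs. rewrite HK by auto. assert (H := INR_n_ge1). assert (HP := PI_RGT_0). nra. Qed.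

Lemma gterm_LP_nonneg s : p = LP -> 0 <= s < T -> 0 <= gterm p x y s.
Proof.
  intros Ep Hs. rewrite Ep. cbn [gterm].
  assert (H1 := Len_pos s Hs). assert (H2 := Ktot_pos s Hs). assert (H3 := ktil_sq_int_nonneg s Hs).
  apply Rmult_le_pos; [|auto]. apply Rmult_le_pos; [lra|]. left; apply Rinv_0_lt_compat; auto.
Qed.

Lemma Area_pos s : 0 <= s < T -> 0 < Area x y s.
Proof.
  intros Hs. destruct (Req_dec s 0) as [->|Hs0]; auto.
  assert (Hs' : 0 < s < T) by lra.
  destruct (MVT_clamp (Area x y) _ T s Hs' continuity_clamp_Area dlim_Area_sol) as [c [Hc E]].
  assert (Hcases : p = AP \/ p = LP \/ p = JP) by (destruct p; auto).
  destruct Hcases as [Ep|[Ep|Ep]].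
  - rewrite Ep in E. cbn [gterm] in E. lra.
  - assert (0 <= gterm p x y c) by (apply gterm_LP_nonneg; auto; lra). nra.
  - apply (pos_of_nonvanishing (Area x y) T s Hs' continuity_clamp_Area HA0). apply HJ; auto.
Qed.

(* [(A / L^2)' = (A' L - 2 A L') / L^3]; for (JP) the bracket equals
   [((L^2 - 2 A K)^2 + 4 A^2 L Q) / (2 A L)] with [Q = int ktil^2 ds]. *)
Lemma ratio_variation_nonneg s : 0 <= s < T ->
  0 <= gterm p x y s * Len x y s - 2 * Area x y s * dLen s.
Proof.
  intros Hs. assert (HL := Len_pos s Hs). assert (HA := Area_pos s Hs). assert (HKp := Ktot_pos s Hs).
  assert (HQ := ktil_sq_int_nonneg s Hs). unfold dLen.
  set (Q := ktil_sq_int s) in *. set (L := Len x y s) in *. set (K := Ktot x y s) in *.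
  set (A := Area x y s) in *.
  assert (Hcases : p = AP \/ p = LP \/ p = JP) by (destruct p; auto).
  destruct Hcases as [Ep|[Ep|Ep]]; rewrite Ep; cbn [gterm];
    change (int_s x y (fun u t => ktil x y u t ^ 2) s) with Q; fold L K A.
  - nra.
  - replace (L * / K * Q * L - 2 * A * (- Q + L * / K * Q * K / L)) with (L * L * Q / K) by (field; lra).
    apply Rdiv_le_0_compat; [apply Rmult_le_pos; nra|lra].
  - replace ((L ^ 2 / (2 * A) - K) * L - 2 * A * (- Q + (L ^ 2 / (2 * A) - K) * K / L))
      with (((L ^ 2 - 2 * A * K) ^ 2 + 4 * A ^ 2 * Q * L) / (2 * A * L)) by (field; lra).
    apply Rdiv_le_0_compat; [|nra].
    assert (0 <= A ^ 2 * Q * L) by (apply Rmult_le_pos; [apply Rmult_le_pos; nra|lra]).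
    assert (0 <= (L ^ 2 - 2 * A * K) ^ 2) by apply pow2_ge_0. lra.
Qed.

Definition dIm1 s :=
  - (4 * INR n * PI) * (gterm p x y s * Len x y s - 2 * Area x y s * dLen s) / Len x y s ^ 3.

Lemma dlim_Im1 s : 0 < s < T -> derivable_pt_lim (Im1 x y n) s (dIm1 s).
Proof.
  intros Hs. assert (HL := Len_pos s ltac:(lra)). unfold Im1. eapply dlim_value.
  - apply (dlim_minus (fun _ => 1) (fun t => 4 * INR n * PI * Area x y t / Len x y t ^ 2));
      [apply dlim_const|].
    apply (dlim_div (fun t => 4 * INR n * PI * Area x y t) (fun t => Len x y t ^ 2)).
    + apply dlim_scal, dlim_Area_sol; auto.
    + apply dlim_sq, dlim_Len_sol; auto.
    + apply pow_nonzero; lra.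
  - unfold dIm1. field. lra.
Qed.

Lemma dIm1_nonpos s : 0 <= s < T -> dIm1 s <= 0.
Proof.
  intros Hs. assert (HL := Len_pos s Hs). assert (H := ratio_variation_nonneg s Hs).
  assert (Hn1 := INR_n_ge1). assert (HP := PI_RGT_0).
  assert (0 < Len x y s ^ 3) by (apply pow_lt; auto).
  unfold dIm1. set (B := gterm p x y s * Len x y s - 2 * Area x y s * dLen s) in *.
  assert (0 <= 4 * INR n * PI * B / Len x y s ^ 3)
    by (apply Rdiv_le_0_compat; [apply Rmult_le_pos; [nra|auto]|auto]).
  replace (- (4 * INR n * PI) * B / Len x y s ^ 3) with (- (4 * INR n * PI * B / Len x y s ^ 3))
    by (field; lra).
  lra.
Qed.

Lemma continuity_clamp_Im1 s : 0 <= s < T -> continuity_pt (fun z => Im1 x y n (Rmax 0 z)) s.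
Proof.
  intros Hs. unfold Im1. assert (HL := Len_pos s Hs).
  apply (cont_minus (fun _ => 1) (fun z => 4 * INR n * PI * Area x y (Rmax 0 z) / Len x y (Rmax 0 z) ^ 2));
    [apply cont_const|].
  apply cont_div; [apply cont_mult; [apply cont_const|apply continuity_clamp_Area; auto]| |].
  - apply cont_pow, continuity_clamp_Len; auto.
  - rewrite Rmax_right by lra. apply pow_nonzero; lra.
Qed.

Lemma Im1_le_init t : 0 < t < T -> Im1 x y n t <= Im1 x y n 0.
Proof.
  intros Ht. destruct (MVT_clamp (Im1 x y n) dIm1 T t Ht continuity_clamp_Im1 dlim_Im1) as [c [Hc E]].
  assert (dIm1 c <= 0) by (apply dIm1_nonpos; lra). nra.
Qed.

Lemma deriv_Im1_nonpos t : 0 < t < T -> deriv_sat (Im1 x y n) t (fun d => d <= 0).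
Proof. intros Ht. exists (dIm1 t). split; [apply dlim_Im1|apply dIm1_nonpos]; auto; lra. Qed.

Lemma flow_AP_properties t : 0 < t < T -> p = AP ->
  deriv_sat (Area x y) t (fun d => d = 0) /\
  Area x y t = Area x y 0 /\
  deriv_sat (fun s => Len x y s ^ 2) t (fun d => d <= 0) /\
  deriv_sat (Im1 x y n) t (fun d => d <= 0).
Proof.
  intros Ht Ep. assert (HL := Len_pos t ltac:(lra)). assert (HQ := ktil_sq_int_nonneg t ltac:(lra)).
  split; [|split; [|split]].
  - exists (gterm p x y t). split; [apply dlim_Area_sol; auto|]. rewrite Ep; reflexivity.
  - destruct (MVT_clamp (Area x y) _ T t Ht continuity_clamp_Area dlim_Area_sol) as [c [Hc E]].
    rewrite Ep in E. cbn [gterm] in E. lra.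
  - exists (2 * Len x y t * dLen t). split; [apply dlim_sq, dlim_Len_sol; auto|].
    unfold dLen. rewrite Ep. cbn [gterm]. nra.
  - apply deriv_Im1_nonpos; auto.
Qed.

Lemma flow_LP_properties t : 0 < t < T -> p = LP ->
  deriv_sat (Area x y) t (fun d => 0 <= d) /\
  Area x y 0 <= Area x y t /\
  deriv_sat (fun s => Len x y s ^ 2) t (fun d => d = 0) /\
  deriv_sat (Im1 x y n) t (fun d => d <= 0).
Proof.
  intros Ht Ep. assert (HL := Len_pos t ltac:(lra)).
  split; [|split; [|split]].
  - exists (gterm p x y t). split; [apply dlim_Area_sol; auto|]. apply gterm_LP_nonneg; auto; lra.
  - destruct (MVT_clamp (Area x y) _ T t Ht continuity_clamp_Area dlim_Area_sol) as [c [Hc E]].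
    assert (0 <= gterm p x y c) by (apply gterm_LP_nonneg; auto; lra). nra.
  - exists (2 * Len x y t * dLen t). split; [apply dlim_sq, dlim_Len_sol; auto|].
    unfold dLen, ktil_sq_int. rewrite Ep. cbn [gterm]. field.
    assert (H := Ktot_pos t ltac:(lra)). lra.
  - apply deriv_Im1_nonpos; auto.
Qed.

Lemma isoperimetric_ratio_bounds t : 0 < t < T ->
  1 - INR n <= Im1 x y n t <= Im1 x y n 0 /\
  4 * PI <= Len x y t ^ 2 / Area x y t <= Len x y 0 ^ 2 / Area x y 0.
Proof.
  intros Ht. assert (Ht' : 0 <= t < T) by lra. assert (H0 : 0 <= 0 < T) by lra.
  assert (HL := Len_pos t Ht'). assert (HA := Area_pos t Ht'). assert (HL0 := Len_pos 0 H0).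
  assert (Hiso := isoperimetric_slice t Ht'). assert (Hmono := Im1_le_init t Ht).
  assert (Hn1 := INR_n_ge1). assert (HP := PI_RGT_0). assert (HA0' := HA0).
  unfold Im1 in *.
  set (L := Len x y t) in *. set (A := Area x y t) in *.
  set (L0 := Len x y 0) in *. set (A0 := Area x y 0) in *.
  assert (HL2 : 0 < L ^ 2) by (apply pow_lt; auto). assert (HL02 : 0 < L0 ^ 2) by (apply pow_lt; auto).
  assert (R1 : 4 * PI * A / L ^ 2 <= 1).
  { apply (Rmult_le_reg_r (L ^ 2)); auto. replace (4 * PI * A / L ^ 2 * L ^ 2) with (4 * PI * A) by (field; lra). lra. }
  assert (R3 : A0 / L0 ^ 2 <= A / L ^ 2).
  { apply (Rmult_le_reg_l (4 * INR n * PI)); [nra|].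
    replace (4 * INR n * PI * (A0 / L0 ^ 2)) with (4 * INR n * PI * A0 / L0 ^ 2) by (field; lra).
    replace (4 * INR n * PI * (A / L ^ 2)) with (4 * INR n * PI * A / L ^ 2) by (field; lra). lra. }
  split; split; auto.
  - replace (4 * INR n * PI * A / L ^ 2) with (INR n * (4 * PI * A / L ^ 2)) by (field; lra).
    assert (INR n * (4 * PI * A / L ^ 2) <= INR n * 1) by (apply Rmult_le_compat_l; lra). lra.
  - apply (Rmult_le_reg_r A); auto. replace (L ^ 2 / A * A) with (L ^ 2) by (field; lra). lra.
  - assert (0 < A0 / L0 ^ 2) by (apply Rdiv_lt_0_compat; auto).
    replace (L ^ 2 / A) with (/ (A / L ^ 2)) by (field; lra).
    replace (L0 ^ 2 / A0) with (/ (A0 / L0 ^ 2)) by (field; lra).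
    apply Rinv_le_contravar; auto.
Qed.

End ClassicalSolution.

Theorem mainTheorem10 (n : nat) (p : flow) (x y : R -> R -> R) (T : R) :
  (1 <= n)%nat -> 0 < T ->
  classical_sol n p x y T ->
  0 < Area x y 0 ->
  forall t, 0 < t < T ->
    (p = AP ->
       deriv_sat (Area x y) t (fun d => d = 0) /\
       Area x y t = Area x y 0 /\
       deriv_sat (fun s => Len x y s ^ 2) t (fun d => d <= 0) /\
       deriv_sat (Im1 x y n) t (fun d => d <= 0)) /\
    (p = LP ->
       deriv_sat (Area x y) t (fun d => 0 <= d) /\
       Area x y 0 <= Area x y t /\
       deriv_sat (fun s => Len x y s ^ 2) t (fun d => d = 0) /\
       deriv_sat (Im1 x y n) t (fun d => d <= 0)) /\
    (p = JP ->
       0 < Area x y t /\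
       deriv_sat (Im1 x y n) t (fun d => d <= 0)) /\
    (1 - INR n <= Im1 x y n t <= Im1 x y n 0 /\
     4 * PI <= Len x y t ^ 2 / Area x y t <= Len x y 0 ^ 2 / Area x y 0).
Proof.
  intros Hn HT Hsol HA0 t Ht.
  destruct Hsol as (Sx & Sy & Hper & Hreg & HK & HJ & Hflow).
  split; [|split; [|split]].
  - apply (flow_AP_properties n p x y T); auto.
  - apply (flow_LP_properties n p x y T); auto.
  - split; [apply (Area_pos n p x y T); auto; lra|apply (deriv_Im1_nonpos n p x y T); auto].
  - apply (isoperimetric_ratio_bounds n p x y T); auto.
Qed.
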